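(* For any $a_0,\dots,a_{23},b_0,\dots,b_{23}\in[0,\infty)$, writing $a(i)=a_i$, $b(i)=b_i$ on $\mathbb{Z}/24\mathbb{Z}$, $$\sum_{t\in\mathbb{Z}/24\mathbb{Z}}(a*b)(t)f_{24}(t)\ge\frac1{2\sqrt5}\Big(\frac29\Big(\sum_ia_i\Big)\Big(\sum_ib_i\Big)-\sum_ia_i^2-\sum_ib_i^2\Big).$$
   Context: $(a*b)(t):=\frac1{24}\sum_{i\in\mathbb{Z}/24\mathbb{Z}}a(i)b(t-i)$ and $f_{24}(t):=\#\{j\in\mathbb{Z}/24\mathbb{Z}:j^2\equiv t\ (\mathrm{mod}\ 24)\}$. *)

(* Z/24Z is 'Z_24 (a genuine ring since 24 >= 2). *)
From mathcomp Require Import all_boot all_order all_algebra.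
Set Implicit Arguments. Unset Strict Implicit. Unset Printing Implicit Defensive.
Import Order.TTheory GRing.Theory Num.Theory.
Local Open Scope ring_scope.

Definition conv24 {R : fieldType} (a b : 'Z_24 -> R) (t : 'Z_24) : R :=
  (24%:R)^-1 * \sum_(i : 'Z_24) a i * b (t - i).

Definition f24 (t : 'Z_24) : nat := #|[set j : 'Z_24 | j * j == t]|.

From mathcomp Require Import all_boot all_order all_algebra.
From Stdlib Require Import ZArith Lia.
From mathcomp Require Import ssrZ ring lra.
Set Implicit Arguments. Unset Strict Implicit. Unset Printing Implicit Defensive.
Import Order.TTheory GRing.Theory Num.Theory.
Local Open Scope ring_scope.

(* Put z = (a, b) in R^48.  By [sum_conv24], the left-hand side minus
   9/40 (2/9 (sum a) (sum b) - sum a^2 - sum b^2) is the quadratic form z^T M z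
   of an explicit 48 x 48 matrix M, so it suffices that M be copositive, since
   1/(2 sqrt 5) <= 9/40.  Copositivity is certified by the cubic identity
     sum_k z_k (z o s_k)^T W (z o s_k) = (sum_k z_k) z^T M z,
   where the s_k are 48 symmetries of M (translations of Z/24Z, possibly
   exchanging a and b) and W = V Y V^T + N with N entrywise nonnegative and Y
   positive semidefinite (an LDL^T factorization plus a diagonally dominant
   remainder): each summand on the left is nonnegative when z >= 0.  The
   integer data of the certificate is checked by computation. *)

Section QuadraticForms.

Variable R : realFieldType.

Definition qform (I : finType) (A : I -> I -> R) (v : I -> R) : R :=
  \sum_i \sum_j A i j * v i * v j.

Definition psd (I : finType) (A : I -> I -> R) := forall v, 0 <= qform A v.

Definition copositive (I : finType) (A : I -> I -> R) :=
  forall v, (forall i, 0 <= v i) -> 0 <= qform A v.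

Lemma eq_qform (I : finType) (A B : I -> I -> R) v :
  A =2 B -> qform A v = qform B v.
Proof.
by move=> eqAB; apply: eq_bigr => i _; apply: eq_bigr => j _; rewrite eqAB.
Qed.

Lemma qformD (I : finType) (A B : I -> I -> R) v :
  qform (fun i j => A i j + B i j) v = qform A v + qform B v.
Proof.
rewrite /qform -big_split; apply: eq_bigr => i _.
by rewrite -big_split; apply: eq_bigr => j _; rewrite !mulrDl.
Qed.

Lemma qformZ (I : finType) (c : R) (A : I -> I -> R) v :
  qform (fun i j => c * A i j) v = c * qform A v.
Proof.
rewrite /qform mulr_sumr; apply: eq_bigr => i _.
by rewrite mulr_sumr; apply: eq_bigr => j _; rewrite !mulrA.
Qed.

Lemma qform_congr (I J : finType) (V : I -> J -> R) (Y : J -> J -> R) v :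
  qform (fun p q => \sum_r \sum_s V p r * Y r s * V q s) v =
  qform Y (fun r => \sum_p V p r * v p).
Proof.
have -> : qform Y (fun r => \sum_p V p r * v p) =
          \sum_r \sum_s \sum_p \sum_q V p r * Y r s * V q s * v p * v q.
  apply: eq_bigr => r _; apply: eq_bigr => s _.
  rewrite -mulrA mulr_suml mulr_sumr; apply: eq_bigr => p _.
  rewrite mulr_sumr mulr_sumr; apply: eq_bigr => q _; ring.
have -> : qform (fun p q => \sum_r \sum_s V p r * Y r s * V q s) v =
          \sum_p \sum_q \sum_r \sum_s V p r * Y r s * V q s * v p * v q.
  apply: eq_bigr => p _; apply: eq_bigr => q _.
  rewrite -mulrA mulr_suml; apply: eq_bigr => r _.
  rewrite mulr_suml; apply: eq_bigr => s _; ring.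
under [RHS]eq_bigr => r _ do rewrite exchange_big.
under [RHS]eq_bigr => r _ do under eq_bigr => p _ do rewrite exchange_big.
by rewrite [RHS]exchange_big; apply: eq_bigr => p _; rewrite exchange_big.
Qed.

Lemma qform_gram (I J : finType) (L : I -> J -> R) (d : J -> R) v :
  qform (fun r s => \sum_t L r t * d t * L s t) v =
  \sum_t d t * (\sum_r L r t * v r) ^+ 2.
Proof.
rewrite /qform; under eq_bigr => r _ do under eq_bigr => s _ do rewrite !mulr_suml.
under eq_bigr => r _ do rewrite exchange_big /=.
rewrite exchange_big; apply: eq_bigr => t _.
rewrite expr2 big_distrl /= mulr_sumr; apply: eq_bigr => r _.
by rewrite big_distrr /= mulr_sumr; apply: eq_bigr => s _; ring.
Qed.

Lemma psd_gram (I J : finType) (L : I -> J -> R) (d : J -> R) :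
  (forall t, 0 <= d t) -> psd (fun r s => \sum_t L r t * d t * L s t).
Proof.
move=> d_ge0 v; rewrite qform_gram.
by apply: sumr_ge0 => t _; rewrite mulr_ge0 ?sqr_ge0.
Qed.

Lemma psdZ (I : finType) (c : R) (A : I -> I -> R) :
  0 < c -> psd (fun i j => c * A i j) -> psd A.
Proof. by move=> c_gt0 pcA v; rewrite -(pmulr_rge0 _ c_gt0) -qformZ. Qed.

Lemma psd_diag_dominant (I : finType) (A : I -> I -> R) :
  (forall r, \sum_(s | s != r) (`|A r s| + `|A s r|) <= 2%:R * A r r) -> psd A.
Proof.
move=> dom v.
pose c r s := if r == s then 0 else `|A r s|.
have termwise r s : (if r == s then A r r * v r ^+ 2 else 0)
    - c r s * (v r ^+ 2 + v s ^+ 2) / 2%:R <= A r s * v r * v s.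
  rewrite /c; case: eqP => [<-|_]; first by rewrite mul0r mul0r subr0 mulrA.
  (* [2 a x y >= - |a| (x^2 + y^2)] since [(|a| +- a) (x +- y)^2 >= 0]. *)
  have h1 : 0 <= (`|A r s| + A r s) * (v r + v s) ^+ 2.
    by rewrite mulr_ge0 ?sqr_ge0 // -lerBlDr sub0r ler_normr lexx orbT.
  have h2 : 0 <= (`|A r s| - A r s) * (v r - v s) ^+ 2.
    by rewrite mulr_ge0 ?sqr_ge0 // subr_ge0 ler_norm.
  lra.
have diag r : \sum_s (if r == s then A r r * v r ^+ 2 else 0) = A r r * v r ^+ 2.
  by rewrite (bigD1 r) //= eqxx big1 ?addr0 // => s; rewrite eq_sym => /negbTE ->.
have off r : \sum_s (c r s + c s r) = \sum_(s | s != r) (`|A r s| + `|A s r|).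
  rewrite [RHS]big_mkcond /=; apply: eq_bigr => s _.
  by rewrite /c eq_sym; case: eqP => _; rewrite ?addr0.
have cross : \sum_r \sum_s c r s * (v r ^+ 2 + v s ^+ 2) / 2%:R =
             \sum_r v r ^+ 2 * (\sum_s (c r s + c s r)) / 2%:R.
  transitivity (\sum_r \sum_s c r s * v r ^+ 2 / 2%:R +
                \sum_r \sum_s c s r * v r ^+ 2 / 2%:R).
    rewrite [X in _ = _ + X]exchange_big -big_split; apply: eq_bigr => r _.
    by rewrite -big_split; apply: eq_bigr => s _ /=; rewrite mulrDr mulrDl.
  rewrite -big_split; apply: eq_bigr => r _.
  by rewrite -big_split mulr_sumr mulr_suml; apply: eq_bigr => s _ /=; ring.
apply: le_trans (ler_sum _ (fun r _ => ler_sum _ (fun s _ => termwise r s))).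
under eq_bigr => r _ do rewrite sumrB diag.
rewrite sumrB cross -sumrB; apply: sumr_ge0 => r _.
have := dom r; rewrite -off => dom_r.
have -> : A r r * v r ^+ 2 - v r ^+ 2 * (\sum_s (c r s + c s r)) / 2%:R =
          v r ^+ 2 * (A r r - (\sum_s (c r s + c s r)) / 2%:R) by ring.
by rewrite mulr_ge0 ?sqr_ge0 //; lra.
Qed.

Lemma copositive_ge0 (I : finType) (A : I -> I -> R) :
  (forall i j, 0 <= A i j) -> copositive A.
Proof.
move=> A_ge0 v v_ge0; apply: sumr_ge0 => i _; apply: sumr_ge0 => j _.
by rewrite !mulr_ge0.
Qed.

Lemma copositive_reindex (I : finType) (A : I -> I -> R) (h : I -> I) :
  bijective h -> copositive A -> copositive (fun i j => A (h i) (h j)).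
Proof.
case=> h' hK h'K cA v v_ge0.
have h'_bij : {on predT, bijective h'} by apply: onW_bij; exists h.
have -> : qform (fun i j => A (h i) (h j)) v = qform A (v \o h').
  rewrite /qform (reindex h') //; apply: eq_bigr => i _.
  by rewrite (reindex h') //; apply: eq_bigr => j _; rewrite /= !h'K.
by apply: cA => i; apply: v_ge0.
Qed.

End QuadraticForms.

Section CubicCertificate.

Variables (R : realFieldType) (I : finType).

Definition sym3 (H : I -> I -> I -> R) k i j :=
  H k i j + H k j i + H i k j + H i j k + H j k i + H j i k.

Definition cubic (H : I -> I -> I -> R) (z : I -> R) :=
  \sum_k \sum_i \sum_j H k i j * (z k * z i * z j).

Lemma cubicD (H1 H2 : I -> I -> I -> R) z :
  cubic (fun k i j => H1 k i j + H2 k i j) z = cubic H1 z + cubic H2 z.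
Proof.
rewrite /cubic -big_split; apply: eq_bigr => k _; rewrite -big_split.
by apply: eq_bigr => i _; rewrite -big_split; apply: eq_bigr => j _; rewrite mulrDl.
Qed.

Lemma cubic_swap23 (H : I -> I -> I -> R) z :
  cubic (fun k i j => H k j i) z = cubic H z.
Proof.
rewrite /cubic; apply: eq_bigr => k _; rewrite exchange_big /=.
by apply: eq_bigr => i _; apply: eq_bigr => j _; congr (_ * _); ring.
Qed.

Lemma cubic_swap12 (H : I -> I -> I -> R) z :
  cubic (fun k i j => H i k j) z = cubic H z.
Proof.
rewrite /cubic exchange_big /=.
by apply: eq_bigr => k _; apply: eq_bigr => i _; apply: eq_bigr => j _; congr (_ * _); ring.
Qed.

Lemma cubic_sym3 (H : I -> I -> I -> R) z : cubic (sym3 H) z = 6%:R * cubic H z.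
Proof.
have P3 : cubic (fun k i j => H i j k) z = cubic H z.
  by rewrite (cubic_swap12 (fun k i j => H k j i)) cubic_swap23.
have P4 : cubic (fun k i j => H j k i) z = cubic H z.
  by rewrite (cubic_swap23 (fun k i j => H i k j)) cubic_swap12.
have P5 : cubic (fun k i j => H j i k) z = cubic H z.
  by rewrite (cubic_swap23 (fun k i j => H i j k)) P3.
rewrite /sym3 !cubicD (cubic_swap23 H) (cubic_swap12 H) P3 P4 P5.
by set x := cubic H z; ring.
Qed.

(* [\sum_k z k * z^T (W k) z = (\sum_k z k) * z^T M z] is a polynomial identity
   in [z]; comparing symmetrized coefficients reduces it to [hW]. *)
Lemma copositive_cubic (M : I -> I -> R) (W : I -> I -> I -> R) :
  (forall k, copositive (W k)) ->
  (forall k i j, sym3 W k i j = sym3 (fun _ => M) k i j) -> copositive M.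
Proof.
move=> W_cop hW z z_ge0.
have cubicW : \sum_k z k * qform (W k) z = cubic W z.
  apply: eq_bigr => k _; rewrite mulr_sumr; apply: eq_bigr => i _.
  by rewrite mulr_sumr; apply: eq_bigr => j _; ring.
have cubicM : (\sum_k z k) * qform M z = cubic (fun _ => M) z.
  rewrite mulr_suml; apply: eq_bigr => k _; rewrite mulr_sumr; apply: eq_bigr => i _.
  by rewrite mulr_sumr; apply: eq_bigr => j _; ring.
have six_neq0 : (6%:R : R) != 0 by rewrite pnatr_eq0.
have cubic_id : \sum_k z k * qform (W k) z = (\sum_k z k) * qform M z.
  rewrite cubicW cubicM; apply: (mulfI six_neq0); rewrite -!cubic_sym3.
  by apply: eq_bigr => k _; apply: eq_bigr => i _; apply: eq_bigr => j _; rewrite hW.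
have sum_ge0 : 0 <= \sum_k z k * qform (W k) z.
  by apply: sumr_ge0 => k _; rewrite mulr_ge0 ?W_cop.
have [z0|z_neq0] := eqVneq (\sum_k z k) 0.
  have zE := psumr_eq0P (fun i _ => z_ge0 i) z0.
  by apply: sumr_ge0 => i _; apply: sumr_ge0 => j _; rewrite zE ?mulr0 ?mul0r.
have z_gt0 : 0 < \sum_k z k by rewrite lt_def z_neq0 sumr_ge0.
by rewrite -(pmulr_rge0 _ z_gt0) -cubic_id.
Qed.

End CubicCertificate.

(* Locked, so that simplification and unification never expose the large
   certificate integers. *)
Fact Zr_key : unit. Proof. exact: tt. Qed.
Definition Zr {R : numDomainType} (n : Z) : R := locked_with Zr_key (int_of_Z n)%:~R.

Section IntegerCast.

Variable R : numDomainType.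

Lemma ZrE (n : Z) : Zr n = (int_of_Z n)%:~R :> R.
Proof. by rewrite /Zr unlock. Qed.

Lemma Zr0 : Zr 0%Z = 0 :> R. Proof. by rewrite ZrE. Qed.

Lemma ZrD (m n : Z) : Zr (m + n)%Z = Zr m + Zr n :> R.
Proof. by rewrite !ZrE -intrD -raddfD. Qed.

Lemma ZrM (m n : Z) : Zr (m * n)%Z = Zr m * Zr n :> R.
Proof. by rewrite !ZrE -intrM -rmorphM. Qed.

Lemma ZrN (m : Z) : Zr (- m)%Z = - Zr m :> R.
Proof. by rewrite !ZrE -intrN -raddfN. Qed.

Lemma ZrB (m n : Z) : Zr (m - n)%Z = Zr m - Zr n :> R.
Proof. by rewrite -Z.add_opp_r ZrD ZrN. Qed.

Lemma Zr_nat (n : nat) : Zr (Z.of_nat n) = n%:R :> R.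
Proof. by rewrite ZrE -[Z.of_nat n]/(Z_of_int n) Z_of_intK pmulrn. Qed.

Lemma Zr_ge0 (m : Z) : (0 <= m)%Z -> 0 <= Zr m :> R.
Proof. by rewrite ZrE; case: m => [|p|p] //= _; rewrite /int_of_Z ?ler0z. Qed.

Lemma Zr_gt0 (m : Z) : (0 < m)%Z -> 0 < Zr m :> R.
Proof. by rewrite ZrE; case: m => [|p|p] /= m_gt0; rewrite /int_of_Z ltr0z; lia. Qed.

Lemma Zr_le (m n : Z) : (m <= n)%Z -> Zr m <= Zr n :> R.
Proof. by move=> le_mn; rewrite -subr_ge0 -ZrB Zr_ge0 //; lia. Qed.

Lemma Zr_abs (m : Z) : Zr (Z.abs m) = `|Zr m| :> R.
Proof.
have [m_ge0|m_lt0] := Z.le_gt_cases 0 m.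
  by rewrite Z.abs_eq // ger0_norm // Zr_ge0.
rewrite Z.abs_neq; last lia.
by rewrite ZrN ler0_norm // -oppr_ge0 -ZrN Zr_ge0 //; lia.
Qed.

End IntegerCast.

Local Open Scope Z_scope.
Definition cert_V : seq (seq Z) := [::
[:: 0; -1; 0; 0; -1; -1; 0; 0; 0; -1; 0; 0; -1; -1; 0; 0; 0; -1; 0; 0; -1; 0; 0; 0; -1; 0; 0; -1; -1; 0; 0; 0; -1; 0; 0; -1; -1; 0; 0; 0; -1; 0; 0; -1; -1];
[:: 0; 1; -1; 0; 1; 0; -1; 0; 0; 1; -1; 0; 1; 0; -1; 0; 0; 1; -1; 0; 1; 0; 0; -1; 1; 0; -1; 0; 1; 0; 0; -1; 1; 0; -1; 0; 1; 0; 0; -1; 1; 0; -1; 0; 1];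
[:: 1; 0; 0; 0; 0; 0; 0; 0; 0; 0; 0; 0; 0; 0; 0; 0; 0; 0; 0; 0; 0; 0; 0; 0; 0; 0; 0; 0; 0; 0; 0; 0; 0; 0; 0; 0; 0; 0; 0; 0; 0; 0; 0; 0; 0];
[:: 0; 0; 0; 0; 1; 0; 0; 0; -1; 0; 0; 0; 1; 0; 0; 0; -1; 0; 0; 0; 1; 0; 0; -1; 0; 0; 0; 1; 0; 0; 0; -1; 0; 0; 0; 1; 0; 0; 0; -1; 0; 0; 0; 1; 0];
[:: 0; 1; 0; 0; 0; 0; 0; 0; 0; 0; 0; 0; 0; 0; 0; 0; 0; 0; 0; 0; 0; 0; 0; 0; 0; 0; 0; 0; 0; 0; 0; 0; 0; 0; 0; 0; 0; 0; 0; 0; 0; 0; 0; 0; 0];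
[:: 0; 0; 1; 0; 0; 0; 0; 0; 0; 0; 0; 0; 0; 0; 0; 0; 0; 0; 0; 0; 0; 0; 0; 0; 0; 0; 0; 0; 0; 0; 0; 0; 0; 0; 0; 0; 0; 0; 0; 0; 0; 0; 0; 0; 0];
[:: 0; 0; 0; 1; 0; 0; 0; 0; 0; 0; 0; 0; 0; 0; 0; 0; 0; 0; 0; 0; 0; 0; 0; 0; 0; 0; 0; 0; 0; 0; 0; 0; 0; 0; 0; 0; 0; 0; 0; 0; 0; 0; 0; 0; 0];
[:: 0; 0; 0; 0; 1; 0; 0; 0; 0; 0; 0; 0; 0; 0; 0; 0; 0; 0; 0; 0; 0; 0; 0; 0; 0; 0; 0; 0; 0; 0; 0; 0; 0; 0; 0; 0; 0; 0; 0; 0; 0; 0; 0; 0; 0];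
[:: 0; 0; 0; 0; 0; 1; 0; 0; 0; 0; 0; 0; 0; 0; 0; 0; 0; 0; 0; 0; 0; 0; 0; 0; 0; 0; 0; 0; 0; 0; 0; 0; 0; 0; 0; 0; 0; 0; 0; 0; 0; 0; 0; 0; 0];
[:: 0; 0; 0; 0; 0; 0; 1; 0; 0; 0; 0; 0; 0; 0; 0; 0; 0; 0; 0; 0; 0; 0; 0; 0; 0; 0; 0; 0; 0; 0; 0; 0; 0; 0; 0; 0; 0; 0; 0; 0; 0; 0; 0; 0; 0];
[:: 0; 0; 0; 0; 0; 0; 0; 1; 0; 0; 0; 0; 0; 0; 0; 0; 0; 0; 0; 0; 0; 0; 0; 0; 0; 0; 0; 0; 0; 0; 0; 0; 0; 0; 0; 0; 0; 0; 0; 0; 0; 0; 0; 0; 0];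
[:: 0; 0; 0; 0; 0; 0; 0; 0; 1; 0; 0; 0; 0; 0; 0; 0; 0; 0; 0; 0; 0; 0; 0; 0; 0; 0; 0; 0; 0; 0; 0; 0; 0; 0; 0; 0; 0; 0; 0; 0; 0; 0; 0; 0; 0];
[:: 0; 0; 0; 0; 0; 0; 0; 0; 0; 1; 0; 0; 0; 0; 0; 0; 0; 0; 0; 0; 0; 0; 0; 0; 0; 0; 0; 0; 0; 0; 0; 0; 0; 0; 0; 0; 0; 0; 0; 0; 0; 0; 0; 0; 0];
[:: 0; 0; 0; 0; 0; 0; 0; 0; 0; 0; 1; 0; 0; 0; 0; 0; 0; 0; 0; 0; 0; 0; 0; 0; 0; 0; 0; 0; 0; 0; 0; 0; 0; 0; 0; 0; 0; 0; 0; 0; 0; 0; 0; 0; 0];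
[:: 0; 0; 0; 0; 0; 0; 0; 0; 0; 0; 0; 1; 0; 0; 0; 0; 0; 0; 0; 0; 0; 0; 0; 0; 0; 0; 0; 0; 0; 0; 0; 0; 0; 0; 0; 0; 0; 0; 0; 0; 0; 0; 0; 0; 0];
[:: 0; 0; 0; 0; 0; 0; 0; 0; 0; 0; 0; 0; 1; 0; 0; 0; 0; 0; 0; 0; 0; 0; 0; 0; 0; 0; 0; 0; 0; 0; 0; 0; 0; 0; 0; 0; 0; 0; 0; 0; 0; 0; 0; 0; 0];
[:: 0; 0; 0; 0; 0; 0; 0; 0; 0; 0; 0; 0; 0; 1; 0; 0; 0; 0; 0; 0; 0; 0; 0; 0; 0; 0; 0; 0; 0; 0; 0; 0; 0; 0; 0; 0; 0; 0; 0; 0; 0; 0; 0; 0; 0];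
[:: 0; 0; 0; 0; 0; 0; 0; 0; 0; 0; 0; 0; 0; 0; 1; 0; 0; 0; 0; 0; 0; 0; 0; 0; 0; 0; 0; 0; 0; 0; 0; 0; 0; 0; 0; 0; 0; 0; 0; 0; 0; 0; 0; 0; 0];
[:: 0; 0; 0; 0; 0; 0; 0; 0; 0; 0; 0; 0; 0; 0; 0; 1; 0; 0; 0; 0; 0; 0; 0; 0; 0; 0; 0; 0; 0; 0; 0; 0; 0; 0; 0; 0; 0; 0; 0; 0; 0; 0; 0; 0; 0];
[:: 0; 0; 0; 0; 0; 0; 0; 0; 0; 0; 0; 0; 0; 0; 0; 0; 1; 0; 0; 0; 0; 0; 0; 0; 0; 0; 0; 0; 0; 0; 0; 0; 0; 0; 0; 0; 0; 0; 0; 0; 0; 0; 0; 0; 0];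
[:: 0; 0; 0; 0; 0; 0; 0; 0; 0; 0; 0; 0; 0; 0; 0; 0; 0; 1; 0; 0; 0; 0; 0; 0; 0; 0; 0; 0; 0; 0; 0; 0; 0; 0; 0; 0; 0; 0; 0; 0; 0; 0; 0; 0; 0];
[:: 0; 0; 0; 0; 0; 0; 0; 0; 0; 0; 0; 0; 0; 0; 0; 0; 0; 0; 1; 0; 0; 0; 0; 0; 0; 0; 0; 0; 0; 0; 0; 0; 0; 0; 0; 0; 0; 0; 0; 0; 0; 0; 0; 0; 0];
[:: 0; 0; 0; 0; 0; 0; 0; 0; 0; 0; 0; 0; 0; 0; 0; 0; 0; 0; 0; 1; 0; 0; 0; 0; 0; 0; 0; 0; 0; 0; 0; 0; 0; 0; 0; 0; 0; 0; 0; 0; 0; 0; 0; 0; 0];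
[:: 0; 0; 0; 0; 0; 0; 0; 0; 0; 0; 0; 0; 0; 0; 0; 0; 0; 0; 0; 0; 1; 0; 0; 0; 0; 0; 0; 0; 0; 0; 0; 0; 0; 0; 0; 0; 0; 0; 0; 0; 0; 0; 0; 0; 0];
[:: 0; 0; 0; 0; 0; 0; 0; 0; 0; 0; 0; 0; 0; 0; 0; 0; 0; 0; 0; 0; 0; 1; 0; 0; 0; 0; 0; 0; 0; 0; 0; 0; 0; 0; 0; 0; 0; 0; 0; 0; 0; 0; 0; 0; 0];
[:: 0; 0; 0; 0; 0; 0; 0; 0; 0; 0; 0; 0; 0; 0; 0; 0; 0; 0; 0; 0; 0; 0; 1; 0; 0; 0; 0; 0; 0; 0; 0; 0; 0; 0; 0; 0; 0; 0; 0; 0; 0; 0; 0; 0; 0];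
[:: 0; 0; 0; 0; 0; 0; 0; 0; 0; 0; 0; 0; 0; 0; 0; 0; 0; 0; 0; 0; 0; 0; 0; 1; 0; 0; 0; 0; 0; 0; 0; 0; 0; 0; 0; 0; 0; 0; 0; 0; 0; 0; 0; 0; 0];
[:: 0; 0; 0; 0; 0; 0; 0; 0; 0; 0; 0; 0; 0; 0; 0; 0; 0; 0; 0; 0; 0; 0; 0; 0; 1; 0; 0; 0; 0; 0; 0; 0; 0; 0; 0; 0; 0; 0; 0; 0; 0; 0; 0; 0; 0];
[:: 0; 0; 0; 0; 0; 0; 0; 0; 0; 0; 0; 0; 0; 0; 0; 0; 0; 0; 0; 0; 0; 0; 0; 0; 0; 1; 0; 0; 0; 0; 0; 0; 0; 0; 0; 0; 0; 0; 0; 0; 0; 0; 0; 0; 0];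
[:: 0; 0; 0; 0; 0; 0; 0; 0; 0; 0; 0; 0; 0; 0; 0; 0; 0; 0; 0; 0; 0; 0; 0; 0; 0; 0; 1; 0; 0; 0; 0; 0; 0; 0; 0; 0; 0; 0; 0; 0; 0; 0; 0; 0; 0];
[:: 0; 0; 0; 0; 0; 0; 0; 0; 0; 0; 0; 0; 0; 0; 0; 0; 0; 0; 0; 0; 0; 0; 0; 0; 0; 0; 0; 1; 0; 0; 0; 0; 0; 0; 0; 0; 0; 0; 0; 0; 0; 0; 0; 0; 0];
[:: 0; 0; 0; 0; 0; 0; 0; 0; 0; 0; 0; 0; 0; 0; 0; 0; 0; 0; 0; 0; 0; 0; 0; 0; 0; 0; 0; 0; 1; 0; 0; 0; 0; 0; 0; 0; 0; 0; 0; 0; 0; 0; 0; 0; 0];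
[:: 0; 0; 0; 0; 0; 0; 0; 0; 0; 0; 0; 0; 0; 0; 0; 0; 0; 0; 0; 0; 0; 0; 0; 0; 0; 0; 0; 0; 0; 1; 0; 0; 0; 0; 0; 0; 0; 0; 0; 0; 0; 0; 0; 0; 0];
[:: 0; 0; 0; 0; 0; 0; 0; 0; 0; 0; 0; 0; 0; 0; 0; 0; 0; 0; 0; 0; 0; 0; 0; 0; 0; 0; 0; 0; 0; 0; 1; 0; 0; 0; 0; 0; 0; 0; 0; 0; 0; 0; 0; 0; 0];
[:: 0; 0; 0; 0; 0; 0; 0; 0; 0; 0; 0; 0; 0; 0; 0; 0; 0; 0; 0; 0; 0; 0; 0; 0; 0; 0; 0; 0; 0; 0; 0; 1; 0; 0; 0; 0; 0; 0; 0; 0; 0; 0; 0; 0; 0];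
[:: 0; 0; 0; 0; 0; 0; 0; 0; 0; 0; 0; 0; 0; 0; 0; 0; 0; 0; 0; 0; 0; 0; 0; 0; 0; 0; 0; 0; 0; 0; 0; 0; 1; 0; 0; 0; 0; 0; 0; 0; 0; 0; 0; 0; 0];
[:: 0; 0; 0; 0; 0; 0; 0; 0; 0; 0; 0; 0; 0; 0; 0; 0; 0; 0; 0; 0; 0; 0; 0; 0; 0; 0; 0; 0; 0; 0; 0; 0; 0; 1; 0; 0; 0; 0; 0; 0; 0; 0; 0; 0; 0];
[:: 0; 0; 0; 0; 0; 0; 0; 0; 0; 0; 0; 0; 0; 0; 0; 0; 0; 0; 0; 0; 0; 0; 0; 0; 0; 0; 0; 0; 0; 0; 0; 0; 0; 0; 1; 0; 0; 0; 0; 0; 0; 0; 0; 0; 0];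
[:: 0; 0; 0; 0; 0; 0; 0; 0; 0; 0; 0; 0; 0; 0; 0; 0; 0; 0; 0; 0; 0; 0; 0; 0; 0; 0; 0; 0; 0; 0; 0; 0; 0; 0; 0; 1; 0; 0; 0; 0; 0; 0; 0; 0; 0];
[:: 0; 0; 0; 0; 0; 0; 0; 0; 0; 0; 0; 0; 0; 0; 0; 0; 0; 0; 0; 0; 0; 0; 0; 0; 0; 0; 0; 0; 0; 0; 0; 0; 0; 0; 0; 0; 1; 0; 0; 0; 0; 0; 0; 0; 0];
[:: 0; 0; 0; 0; 0; 0; 0; 0; 0; 0; 0; 0; 0; 0; 0; 0; 0; 0; 0; 0; 0; 0; 0; 0; 0; 0; 0; 0; 0; 0; 0; 0; 0; 0; 0; 0; 0; 1; 0; 0; 0; 0; 0; 0; 0];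
[:: 0; 0; 0; 0; 0; 0; 0; 0; 0; 0; 0; 0; 0; 0; 0; 0; 0; 0; 0; 0; 0; 0; 0; 0; 0; 0; 0; 0; 0; 0; 0; 0; 0; 0; 0; 0; 0; 0; 1; 0; 0; 0; 0; 0; 0];
[:: 0; 0; 0; 0; 0; 0; 0; 0; 0; 0; 0; 0; 0; 0; 0; 0; 0; 0; 0; 0; 0; 0; 0; 0; 0; 0; 0; 0; 0; 0; 0; 0; 0; 0; 0; 0; 0; 0; 0; 1; 0; 0; 0; 0; 0];
[:: 0; 0; 0; 0; 0; 0; 0; 0; 0; 0; 0; 0; 0; 0; 0; 0; 0; 0; 0; 0; 0; 0; 0; 0; 0; 0; 0; 0; 0; 0; 0; 0; 0; 0; 0; 0; 0; 0; 0; 0; 1; 0; 0; 0; 0];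
[:: 0; 0; 0; 0; 0; 0; 0; 0; 0; 0; 0; 0; 0; 0; 0; 0; 0; 0; 0; 0; 0; 0; 0; 0; 0; 0; 0; 0; 0; 0; 0; 0; 0; 0; 0; 0; 0; 0; 0; 0; 0; 1; 0; 0; 0];
[:: 0; 0; 0; 0; 0; 0; 0; 0; 0; 0; 0; 0; 0; 0; 0; 0; 0; 0; 0; 0; 0; 0; 0; 0; 0; 0; 0; 0; 0; 0; 0; 0; 0; 0; 0; 0; 0; 0; 0; 0; 0; 0; 1; 0; 0];
[:: 0; 0; 0; 0; 0; 0; 0; 0; 0; 0; 0; 0; 0; 0; 0; 0; 0; 0; 0; 0; 0; 0; 0; 0; 0; 0; 0; 0; 0; 0; 0; 0; 0; 0; 0; 0; 0; 0; 0; 0; 0; 0; 0; 1; 0];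
[:: 0; 0; 0; 0; 0; 0; 0; 0; 0; 0; 0; 0; 0; 0; 0; 0; 0; 0; 0; 0; 0; 0; 0; 0; 0; 0; 0; 0; 0; 0; 0; 0; 0; 0; 0; 0; 0; 0; 0; 0; 0; 0; 0; 0; 1]].
Definition cert_Y : seq (seq Z) := [::
[:: 883440; -172620; 58590; -258720; -19290; 36690; 54330; -71010; -38430; -116100; 44730; 132330; 94980; 65400; 52170; 5010; -11160; 219960; 50610; -609690; -47100; -32460; 1590; 53280; -318090; -70500; -8250; -219270; 267990; -12330; -53790; 76440; -169500; -21750; -142590; 64260; -20040; -58410; 38850; -224010; -143070; 6150; -41190; 76020; 416400];
[:: -172620; 884736; -14070; -194130; 0; 0; 16170; 90510; 0; 0; -25950; -172440; 0; 0; -13590; -194400; 0; 0; 21450; 90000; 0; 261120; -48450; -98304; -98304; -133440; 281610; -98304; -98304; 130590; -17160; -98304; -98304; 284250; -199320; -98304; -98304; -146940; -66120; -98304; -98304; 111600; 541770; -98304; -98304];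
[:: 58590; -14070; 884736; -35730; -89628; 0; 0; 95460; -67410; 14130; 0; 60660; 24300; 0; 0; -40080; -91710; -119040; 0; 103470; -73050; -54630; -34830; -98304; -61260; -20940; -98304; -98304; 50610; -334830; -75090; -98304; 298290; -200310; -98304; -98304; -75510; -64230; -190380; -98304; 45180; 371370; -98304; -98304; 294960];
[:: -258720; -194130; -35730; 737790; 6720; 21930; 21900; -82650; -88320; -67500; 33000; 4980; -123840; 27810; -20100; 116280; 17610; -292740; 18030; -75210; -95220; 39210; 28830; -83640; 191730; 46740; -181350; 82350; -115170; -93480; 48390; 66090; -30150; 31500; -67230; -77730; 69960; 43200; -52500; 71460; 489960; -96480; -81060; 83070; -45990];
[:: -19290; 0; -89628; 6720; 884736; 0; -14988; -75240; -35196; 0; 107592; -13950; 0; 0; -95208; 14160; -34416; 0; -12678; -73740; 0; -58650; -195090; 162384; -98304; -161670; -88188; -98304; -98304; -81060; 266580; -132546; -98304; -46920; -205398; -98304; -98304; -175410; 19860; 538884; -98304; -82620; 22722; -98304; -98304];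
[:: 36690; 0; 0; 21930; 0; 884736; 0; -4980; 0; 0; 0; 36810; 0; 0; 0; 22200; 0; 0; 0; -4830; 0; -85230; 360420; -98304; -98304; 148200; -98304; -98304; -98304; 111870; -114030; -98304; -98304; -83640; -98304; -98304; -98304; 133650; 430200; -98304; -98304; 111570; -98304; -98304; -98304];
[:: 54330; 16170; 0; 21900; -14988; 0; 884736; -16020; -55800; -74970; 0; 43320; 85650; 0; 0; 26790; -15480; 70980; 0; -25260; -59010; 225810; -132420; -98304; 34830; -240360; -98304; -98304; 261570; -49110; -162630; -98304; -172380; -262050; -98304; -98304; 50310; 106470; -80400; -98304; 262500; -215100; -98304; -98304; -165750];
[:: -71010; 90510; 95460; -82650; -75240; -4980; -16020; 907620; 47490; -92940; -40230; -610680; -56580; -38610; 97710; -76050; -79020; -204060; -16230; 99180; 40170; -84870; 61140; 28710; -129960; 76200; 17130; 157110; -80430; -20700; -6360; -145050; -163440; -91710; 15000; 31140; 505350; 80220; -41460; 148590; -120360; -9360; -131340; -143490; 290220];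
[:: -38430; 0; -67410; -88320; -35196; 0; -55800; 47490; 884736; 0; -96960; -41730; -56430; 0; -58590; -98910; 0; 0; -61350; 40830; -105750; -21810; 23850; -98304; -98304; -55350; -25530; -30570; -98304; -37440; -22200; -98304; -98304; -26850; 39570; 637110; -98304; -71490; 242340; -98304; -98304; -49350; -82380; 180660; -98304];
[:: -116100; 0; 14130; -67500; 0; 0; -74970; -92940; 0; 884736; 48750; -116010; 0; 0; 8910; -67500; 0; 0; -76650; -93030; 0; 147990; -97800; -98304; -98304; 98010; -229680; -98304; -98304; 13260; -92850; -98304; -98304; 149340; 537450; -98304; -98304; 95340; 62940; -98304; -98304; 3240; 316260; -98304; -98304];
[:: 44730; -25950; 0; 33000; 107592; 0; 0; -40230; -96960; 48750; 884736; 32220; 52290; 0; 0; 38400; 117000; 37350; 0; -50580; -93270; -240690; -158220; -98304; 198330; -439320; -98304; -98304; -148080; -259650; -45510; -98304; 37350; 458880; -98304; -98304; 206340; -141300; -141690; -98304; -163350; 139080; -98304; -98304; 37560];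
[:: 132330; -172440; 60660; 4980; -13950; 36810; 43320; -610680; -41730; -116010; 32220; 882150; 98010; 64440; 48840; -257370; -15120; 220530; 58680; -71820; -40200; -30360; 1470; 59340; -20820; -61050; -8490; -225180; -142230; -6000; -53070; 78600; 415500; -24240; -142890; 60600; -318690; -73170; 37560; -217830; 267000; 2970; -40440; 74100; -170340];
[:: 94980; 0; 24300; -123840; 0; 0; 85650; -56580; -56430; 0; 52290; 98010; 884736; 0; 7980; -112410; 91440; 0; 84450; -48600; 0; -146190; 15930; -212700; -98304; -192720; -218790; -98304; -98304; -91950; 107700; 545250; -98304; -138690; -108780; -98304; -98304; -200190; -40110; 82080; -98304; -86610; -91590; -98304; -98304];
[:: 65400; 0; 0; 27810; 0; 0; 0; -38610; 0; 0; 0; 64440; 0; 884736; 0; 27120; 0; 0; 0; -38340; 0; 187980; 16530; -98304; -98304; 6060; -98304; -98304; -98304; -25620; 332280; -98304; -98304; 189930; -98304; -98304; -98304; -9360; 327630; -98304; -98304; -12510; -98304; -98304; -98304];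
[:: 52170; -13590; 0; -20100; -95208; 0; 0; 97710; -58590; 8910; 0; 48840; 7980; 0; 884736; -18090; -95550; -123570; 0; 89370; -61800; -178140; -43410; -98304; -78390; -79200; -98304; -98304; 57300; 383070; -88800; -98304; 294630; -59820; -98304; -98304; -62580; -14250; -182160; -98304; 64080; -345330; -98304; -98304; 297150];
[:: 5010; -194400; -40080; 116280; 14160; 22200; 26790; -76050; -98910; -67500; 38400; -257370; -112410; 27120; -18090; 735450; 9390; -292440; 13410; -82320; -82410; 38160; 28740; -73710; 69780; 34860; -180270; 70800; 488310; -89670; 47190; 76890; -45360; 31830; -66840; -86730; 190590; 57540; -49770; 83670; -114900; -102060; -81000; 76140; -30720];
[:: -11160; 0; -91710; 17610; -34416; 0; -15480; -79020; 0; 0; 117000; -15120; 91440; 0; -95550; 9390; 884736; 0; -16200; -82800; -35460; -58770; -200520; -98304; -98304; -168720; -88860; 535470; -98304; -80280; 272100; -98304; -98304; -46230; -210900; 157800; -98304; -180390; 17250; -98304; -98304; -83010; 21600; -125010; -98304];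
[:: 219960; 0; -119040; -292740; 0; 0; 70980; -204060; 0; 0; 37350; 220530; 0; 0; -123570; -292440; 0; 884736; 61950; -204330; 0; -19590; -17070; -98304; -98304; 5580; 505110; -98304; -98304; 262860; -87990; -98304; -98304; -25860; 262980; -98304; -98304; 11820; 1170; -98304; -98304; 272340; -144030; -98304; -98304];
[:: 50610; 21450; 0; 18030; -12678; 0; 0; -16230; -61350; -76650; 0; 58680; 84450; 0; 0; 13410; -16200; 61950; 884736; -11880; -66300; -248610; -121320; -98304; 53220; 110250; -98304; -98304; 256380; -233250; -167460; -98304; -156450; 229770; -98304; -98304; 38520; -244260; -77850; -98304; 251790; -43350; -98304; -98304; -160770];
[:: -609690; 90000; 103470; -75210; -73740; -4830; -25260; 99180; 40830; -93030; -50580; -71820; -48600; -38340; 89370; -82320; -82800; -204330; -11880; 906600; 45450; -82020; 62910; 32040; 505020; 78870; 17460; 152010; -120900; -13470; -5640; -136920; 290580; -93870; 15330; 26310; -129540; 75990; -42750; 154110; -81090; -13290; -130680; -147990; -161940];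
[:: -47100; 0; -73050; -95220; 0; 0; -59010; 40170; -105750; 0; -93270; -40200; 0; 0; -61800; -82410; -35460; 0; -66300; 45450; 884736; -17910; 10080; 640140; -98304; -49920; -20250; -98304; -98304; -39510; -10650; 177120; -98304; -23190; 37410; -98304; -98304; -66960; 240810; -31140; -98304; -56040; -78750; -98304; -98304];
[:: -32460; 261120; -54630; 39210; -58650; -85230; 225810; -84870; -21810; 147990; -240690; -30360; -146190; 187980; -178140; 38160; -58770; -19590; -248610; -82020; -17910; 884640; -31770; -43770; 46680; 16830; 74850; -154200; -42810; 66690; -73590; -37890; -59730; -177660; 30300; -44940; 51720; -38130; 89550; -153780; -30600; -136170; 268680; -38160; -57360];
[:: 1590; -48450; -34830; 28830; -195090; 360420; -132420; 61140; 23850; -97800; -158220; 1470; 15930; 16530; -43410; 28740; -200520; -17070; -121320; 62910; 10080; -31770; 920430; -69540; -92190; 304590; -20490; -60600; -94860; 107670; 69960; 27450; -59580; -59040; -3540; -38490; -92430; 312480; -11850; -55410; -96390; 129900; -88290; 27360; -62310];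
[:: 53280; -98304; -98304; -83640; 162384; -98304; -98304; 28710; -98304; -98304; -98304; 59340; -212700; -98304; -98304; -73710; -98304; -98304; -98304; 32040; 640140; -43770; -69540; 884736; 0; -12480; 0; 0; 0; -34710; 40560; 0; 0; -48660; 0; 0; 0; -19860; 81960; 0; 0; -37800; 0; 0; 0];
[:: -318090; -98304; -61260; 191730; -98304; -98304; 34830; -129960; -98304; -98304; 198330; -20820; -98304; -98304; -78390; 69780; -98304; -98304; 53220; 505020; -98304; 46680; -92190; 0; 884736; -17910; 92610; 0; 0; -66450; -132660; 0; 0; 59700; 64830; 0; 0; -7170; -160290; 0; 0; -46980; -196740; 0; 0];
[:: -70500; -133440; -20940; 46740; -161670; 148200; -240360; 76200; -55350; 98010; -439320; -61050; -192720; 6060; -79200; 34860; -168720; 5580; 110250; 78870; -49920; 16830; 304590; -12480; -17910; 852240; 144600; 38160; 36480; -9780; 30510; -3990; -13290; -54630; 199950; -17130; -31350; 253980; 211110; 32100; 49890; 2040; 10200; 1710; -6570];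
[:: -8250; 281610; -98304; -181350; -88188; -98304; -98304; 17130; -25530; -229680; -98304; -8490; -218790; -98304; -98304; -180270; -88860; 505110; -98304; 17460; -20250; 74850; -20490; 0; 92610; 144600; 884736; 0; -78870; 232230; -82230; 0; 18720; 79410; 0; 0; 93540; 171330; -45330; 0; -79170; 220050; 0; 0; 18270];
[:: -219270; -98304; -98304; 82350; -98304; -98304; -98304; 157110; -30570; -98304; -98304; -225180; -98304; -98304; -98304; 70800; 535470; -98304; -98304; 152010; -98304; -154200; -60600; 0; 0; 38160; 0; 884736; 0; 24720; 196980; 0; 0; -158340; 0; 0; 0; 35730; -41010; 0; 0; 26550; 0; 0; 0];
[:: 267990; -98304; 50610; -115170; -98304; -98304; 261570; -80430; -98304; -98304; -148080; -142230; -98304; -98304; 57300; 488310; -98304; -98304; 256380; -120900; -98304; -42810; -94860; 0; 0; 36480; -78870; 0; 884736; -24990; -166320; 0; 0; -48540; -26010; 0; 0; 58290; -189450; 0; 0; -10560; 65580; 0; 0];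
[:: -12330; 130590; -334830; -93480; -81060; 111870; -49110; -20700; -37440; 13260; -259650; -6000; -91950; -25620; 383070; -89670; -80280; 262860; -233250; -13470; -39510; 66690; 107670; -34710; -66450; -9780; 232230; 24720; -24990; 971310; -18180; -58740; 41910; -148890; 214350; -27810; -64410; 17160; -124650; 30510; -7260; -224490; 109650; -58530; 49680];
[:: -53790; -17160; -75090; 48390; 266580; -114030; -162630; -6360; -22200; -92850; -45510; -53070; 107700; 332280; -88800; 47190; 272100; -87990; -167460; -5640; -10650; -73590; 69960; 40560; -132660; 30510; -82230; 196980; -166320; -18180; 773250; -28740; -133680; -83040; -136920; 31380; -132750; 27090; -102870; 195060; -164610; -22440; -111390; -21990; -134040];
[:: 76440; -98304; -98304; 66090; -132546; -98304; -98304; -145050; -98304; -98304; -98304; 78600; 545250; -98304; -98304; 76890; -98304; -98304; -98304; -136920; 177120; -37890; 27450; 0; 0; -3990; 0; 0; 0; -58740; -28740; 884736; 0; -26760; 0; 0; 0; -3960; 100170; 0; 0; -65910; 0; 0; 0];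
[:: -169500; -98304; 298290; -30150; -98304; -98304; -172380; -163440; -98304; -98304; 37350; 415500; -98304; -98304; 294630; -45360; -98304; -98304; -156450; 290580; -98304; -59730; -59580; 0; 0; -13290; 18720; 0; 0; 41910; -133680; 0; 884736; -53730; -53850; 0; 0; 1740; -133320; 0; 0; 50970; -4170; 0; 0];
[:: -21750; 284250; -200310; 31500; -46920; -83640; -262050; -91710; -26850; 149340; 458880; -24240; -138690; 189930; -59820; 31830; -46230; -25860; 229770; -93870; -23190; -177660; -59040; -48660; 59700; -54630; 79410; -158340; -48540; -148890; -83040; -26760; -53730; 933780; 14700; -48720; 51900; -12570; 114360; -159360; -61350; 51960; 286890; -26580; -54870];
[:: -142590; -199320; -98304; -67230; -205398; -98304; -98304; 15000; 39570; 537450; -98304; -142890; -108780; -98304; -98304; -66840; -210900; 262980; -98304; 15330; 37410; 30300; -3540; 0; 64830; 199950; 0; 0; -26010; 214350; -136920; 0; -53850; 14700; 884736; 0; 64140; 198720; -20640; 0; -25860; 220290; 0; 0; -52680];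
[:: 64260; -98304; -98304; -77730; -98304; -98304; -98304; 31140; 637110; -98304; -98304; 60600; -98304; -98304; -98304; -86730; 157800; -98304; -98304; 26310; -98304; -44940; -38490; 0; 0; -17130; 0; 0; 0; -27810; 31380; 0; 0; -48720; 0; 884736; 0; -20580; 71760; 0; 0; -28230; 0; 0; 0];
[:: -20040; -98304; -75510; 69960; -98304; -98304; 50310; 505350; -98304; -98304; 206340; -318690; -98304; -98304; -62580; 190590; -98304; -98304; 38520; -129540; -98304; 51720; -92430; 0; 0; -31350; 93540; 0; 0; -64410; -132750; 0; 0; 51900; 64140; 0; 884736; 9480; -159810; 0; 0; -49470; -196980; 0; 0];
[:: -58410; -146940; -64230; 43200; -175410; 133650; 106470; 80220; -71490; 95340; -141300; -73170; -200190; -9360; -14250; 57540; -180390; 11820; -244260; 75990; -66960; -38130; 312480; -19860; -7170; 253980; 171330; 35730; 58290; 17160; 27090; -3960; 1740; -12570; 198720; -20580; 9480; 853860; 159480; 23970; 43200; -5760; -6120; 330; -2070];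
[:: 38850; -66120; -190380; -52500; 19860; 430200; -80400; -41460; 242340; 62940; -141690; 37560; -40110; 327630; -182160; -49770; 17250; 1170; -77850; -42750; 240810; 89550; -11850; 81960; -160290; 211110; -45330; -41010; -189450; -124650; -102870; 100170; -133320; 114360; -20640; 71760; -159810; 159480; 961110; -53160; -190080; -134160; -5940; 100830; -130020];
[:: -224010; -98304; -98304; 71460; 538884; -98304; -98304; 148590; -98304; -98304; -98304; -217830; 82080; -98304; -98304; 83670; -98304; -98304; -98304; 154110; -31140; -153780; -55410; 0; 0; 32100; 0; 0; 0; 30510; 195060; 0; 0; -159360; 0; 0; 0; 23970; -53160; 884736; 0; 29280; 0; 0; 0];
[:: -143070; -98304; 45180; 489960; -98304; -98304; 262500; -120360; -98304; -98304; -163350; 267000; -98304; -98304; 64080; -114900; -98304; -98304; 251790; -81090; -98304; -30600; -96390; 0; 0; 49890; -79170; 0; 0; -7260; -164610; 0; 0; -61350; -25860; 0; 0; 43200; -190080; 0; 884736; -25980; 65730; 0; 0];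
[:: 6150; 111600; 371370; -96480; -82620; 111570; -215100; -9360; -49350; 3240; 139080; 2970; -86610; -12510; -345330; -102060; -83010; 272340; -43350; -13290; -56040; -136170; 129900; -37800; -46980; 2040; 220050; 26550; -10560; -224490; -22440; -65910; 50970; 51960; 220290; -28230; -49470; -5760; -134160; 29280; -25980; 977010; 95910; -66180; 39060];
[:: -41190; 541770; -98304; -81060; 22722; -98304; -98304; -131340; -82380; 316260; -98304; -40440; -91590; -98304; -98304; -81000; 21600; -144030; -98304; -130680; -78750; 268680; -88290; 0; -196740; 10200; 0; 0; 65580; 109650; -111390; 0; -4170; 286890; 0; 0; -196980; -6120; -5940; 0; 65730; 95910; 884736; 0; -4890];
[:: 76020; -98304; -98304; 83070; -98304; -98304; -98304; -143490; 180660; -98304; -98304; 74100; -98304; -98304; -98304; 76140; -125010; -98304; -98304; -147990; -98304; -38160; 27360; 0; 0; 1710; 0; 0; 0; -58530; -21990; 0; 0; -26580; 0; 0; 0; 330; 100830; 0; 0; -66180; 0; 884736; 0];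
[:: 416400; -98304; 294960; -45990; -98304; -98304; -165750; 290220; -98304; -98304; 37560; -170340; -98304; -98304; 297150; -30720; -98304; -98304; -160770; -161940; -98304; -57360; -62310; 0; 0; -6570; 18270; 0; 0; 49680; -134040; 0; 0; -54870; -52680; 0; 0; -2070; -130020; 0; 0; 39060; -4890; 0; 884736]].
Definition cert_N : seq (seq Z) := [::
[:: 0; 0; 3783; 0; 0; 0; 3798; 0; 0; 0; 3798; 0; 0; 0; 3783; 0; 0; 0; 3798; 0; 0; 0; 3783; 0; 3799; 8130; 0; 0; 3810; 0; 0; 0; 3804; 6630; 0; 0; 3799; 0; 0; 0; 3809; 5190; 0; 0; 3804; 0; 0; 0];
[:: 0; 0; 3708; 3726; 3762; 0; 3810; 3726; 0; 0; 3810; 3810; 3810; 0; 3810; 3810; 0; 0; 3930; 3768; 3810; 0; 3780; 3810; 70562; 6090; 0; 3800; 41490; 0; 0; 3810; 12270; 6032; 0; 3760; 45232; 0; 0; 3810; 38700; 5592; 0; 3810; 11910; 0; 0; 3810];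
[:: 3783; 3708; 3810; 3810; 328860; 3810; 153720; 3750; 3810; 3810; 3810; 3810; 44310; 3780; 17880; 3810; 3810; 3798; 3810; 3810; 18810; 3810; 328890; 3810; 3810; 14760; 3810; 3810; 3810; 3810; 3810; 11670; 3810; 9330; 3810; 3810; 3810; 3810; 3810; 8652; 3782; 11910; 3810; 3810; 3810; 3810; 3772; 13920];
[:: 0; 3726; 3810; 0; 0; 3828; 3810; 3810; 0; 3828; 3810; 0; 0; 3810; 3840; 3810; 0; 3810; 3810; 0; 0; 3810; 3810; 3810; 3810; 112740; 0; 0; 3810; 5760; 5550; 0; 3810; 11682; 0; 0; 3772; 94020; 4848; 0; 3810; 5760; 0; 0; 3810; 11340; 6178; 0];
[:: 0; 3762; 328860; 0; 0; 3816; 18810; 0; 0; 3810; 153210; 0; 0; 3810; 329100; 0; 0; 3816; 18840; 0; 0; 3786; 153720; 0; 3762; 7530; 0; 0; 3812; 6542; 0; 0; 3810; 7352; 0; 0; 3792; 7362; 0; 0; 3810; 6510; 0; 0; 3810; 7462; 0; 0];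
[:: 0; 0; 3810; 3828; 3816; 0; 3810; 3798; 0; 0; 3750; 3780; 3810; 0; 3810; 3810; 0; 0; 3810; 3810; 3810; 0; 3810; 3780; 11940; 6240; 0; 3762; 59010; 0; 0; 3810; 44952; 5642; 0; 3810; 11970; 0; 0; 3762; 59940; 6012; 0; 3810; 52642; 0; 0; 3810];
[:: 3798; 3810; 153720; 3810; 18810; 3810; 3810; 3810; 3810; 3810; 18840; 3780; 6240; 3810; 3810; 3780; 3810; 3810; 6240; 3810; 153210; 3810; 3810; 3810; 3802; 12150; 3810; 8280; 3810; 3810; 3772; 3810; 3792; 8280; 3782; 5550; 3810; 3810; 3810; 3810; 3810; 5550; 3810; 12150; 3762; 3810; 3812; 3810];
[:: 0; 3726; 3750; 3810; 0; 3798; 3810; 0; 0; 3810; 3810; 3810; 0; 3810; 3810; 0; 0; 3828; 3810; 3810; 0; 3828; 3810; 0; 3772; 54360; 5648; 0; 3810; 11950; 0; 0; 3810; 59760; 5988; 0; 3802; 44640; 0; 0; 3782; 11970; 6210; 0; 3810; 59090; 0; 0];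
[:: 0; 0; 3810; 0; 0; 0; 3810; 0; 0; 0; 3780; 0; 0; 0; 3810; 0; 0; 0; 3810; 0; 0; 0; 3780; 0; 3772; 7920; 0; 0; 3810; 0; 0; 0; 3782; 6782; 0; 0; 3802; 0; 0; 0; 3810; 7950; 0; 0; 3810; 0; 0; 0];
[:: 0; 0; 3810; 3828; 3810; 0; 3810; 3810; 0; 0; 3828; 3810; 3816; 0; 3810; 3810; 0; 0; 3810; 3810; 3810; 0; 3810; 3810; 11670; 6150; 0; 3810; 93420; 0; 0; 3810; 5742; 5520; 0; 3810; 11340; 0; 0; 3810; 117180; 4860; 0; 3810; 5760; 0; 0; 3810];
[:: 3798; 3810; 3810; 3810; 153210; 3750; 18840; 3810; 3780; 3828; 3810; 3810; 17880; 3810; 329040; 3780; 3810; 3810; 3810; 3780; 329040; 3768; 44310; 3828; 3772; 13890; 3810; 3810; 3782; 3792; 3810; 11910; 3810; 11702; 3762; 3810; 3810; 3792; 3772; 14782; 3752; 8670; 3810; 3792; 3810; 3762; 3810; 9330];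
[:: 0; 3810; 3810; 0; 0; 3780; 3780; 3810; 0; 3810; 3810; 0; 0; 3810; 3810; 3780; 0; 3810; 3798; 0; 0; 3810; 3810; 3810; 3802; 66300; 0; 0; 3810; 42180; 5562; 0; 3810; 12210; 0; 0; 3810; 46020; 6120; 0; 3810; 38970; 0; 0; 3762; 11910; 5970; 0];
[:: 0; 3810; 44310; 0; 0; 3810; 6240; 0; 0; 3816; 17880; 0; 0; 3756; 44310; 0; 0; 3756; 6240; 0; 0; 3810; 17880; 0; 3782; 7530; 0; 0; 3810; 5160; 0; 0; 3810; 6360; 0; 0; 3810; 7530; 0; 0; 3810; 5142; 0; 0; 3762; 6360; 0; 0];
[:: 0; 0; 3780; 3810; 3810; 0; 3810; 3810; 0; 0; 3810; 3810; 3756; 0; 3810; 3780; 0; 0; 3810; 3810; 3810; 0; 3780; 3810; 46012; 6120; 0; 3810; 39002; 0; 0; 3810; 11910; 5972; 0; 3810; 66300; 0; 0; 3812; 42180; 5550; 0; 3810; 12210; 0; 0; 3772];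
[:: 3783; 3810; 17880; 3840; 329100; 3810; 3810; 3810; 3810; 3810; 329040; 3810; 44310; 3810; 3810; 3870; 3810; 3810; 153180; 3810; 18840; 3828; 3810; 3810; 3810; 14790; 3810; 8670; 3812; 3810; 3810; 3810; 3792; 9330; 3810; 13912; 3810; 3792; 3810; 3810; 3782; 11892; 3792; 11670; 3810; 3810; 3802; 3810];
[:: 0; 3810; 3810; 3810; 0; 3810; 3780; 0; 0; 3810; 3780; 3780; 0; 3780; 3870; 0; 0; 3810; 3810; 3810; 0; 3810; 3810; 0; 3772; 117180; 4860; 0; 3810; 5760; 0; 0; 3792; 11652; 6150; 0; 3772; 93420; 0; 0; 3782; 5760; 5520; 0; 3810; 11302; 0; 0];
[:: 0; 0; 3810; 0; 0; 0; 3810; 0; 0; 0; 3810; 0; 0; 0; 3810; 0; 0; 0; 3780; 0; 0; 0; 3780; 0; 3810; 7972; 0; 0; 3782; 0; 0; 0; 3810; 7932; 0; 0; 3792; 0; 0; 0; 3810; 6780; 0; 0; 3810; 0; 0; 0];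
[:: 0; 0; 3798; 3810; 3816; 0; 3810; 3828; 0; 0; 3810; 3810; 3756; 0; 3810; 3810; 0; 0; 3810; 3810; 3810; 0; 3810; 3810; 11970; 6268; 0; 3810; 59130; 0; 0; 3810; 54360; 5640; 0; 3810; 11940; 0; 0; 3810; 59812; 5970; 0; 3810; 44640; 0; 0; 3810];
[:: 3798; 3930; 3810; 3810; 18840; 3810; 6240; 3810; 3810; 3810; 3810; 3798; 6240; 3810; 153180; 3810; 3780; 3810; 3810; 3810; 153720; 3798; 18870; 3810; 3772; 12150; 3810; 3792; 3810; 3762; 3810; 12172; 3792; 8252; 3810; 3762; 3810; 3810; 3810; 8282; 3810; 5550; 3802; 3762; 3792; 3810; 3810; 5550];
[:: 0; 3768; 3810; 0; 0; 3810; 3810; 3810; 0; 3810; 3780; 0; 0; 3810; 3810; 3810; 0; 3810; 3810; 0; 0; 3810; 3810; 3810; 3802; 52680; 0; 0; 3810; 11940; 6232; 0; 3810; 59062; 0; 0; 3772; 44910; 5670; 0; 3810; 11970; 0; 0; 3810; 59940; 5970; 0];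
[:: 0; 3810; 18810; 0; 0; 3810; 153210; 0; 0; 3810; 329040; 0; 0; 3810; 18840; 0; 0; 3810; 153720; 0; 0; 3810; 328890; 0; 3810; 7440; 0; 0; 3810; 7530; 0; 0; 3810; 6570; 0; 0; 3810; 7410; 0; 0; 3810; 7410; 0; 0; 3812; 6510; 0; 0];
[:: 0; 0; 3810; 3810; 3786; 0; 3810; 3828; 0; 0; 3768; 3810; 3810; 0; 3828; 3810; 0; 0; 3798; 3810; 3810; 0; 3810; 3810; 11320; 6180; 0; 3810; 112752; 0; 0; 3810; 5730; 5528; 0; 3792; 11640; 0; 0; 3810; 94020; 4860; 0; 3810; 5760; 0; 0; 3810];
[:: 3783; 3780; 328890; 3810; 153720; 3810; 3810; 3810; 3780; 3810; 44310; 3810; 17880; 3780; 3810; 3810; 3780; 3810; 18870; 3810; 328890; 3810; 3810; 3810; 3810; 13912; 3810; 14812; 3782; 3810; 3810; 3810; 3810; 11702; 3762; 9330; 3802; 3810; 3772; 3810; 3810; 8670; 3810; 11892; 3810; 3792; 3792; 3810];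
[:: 0; 3810; 3810; 3810; 0; 3780; 3810; 0; 0; 3810; 3828; 3810; 0; 3810; 3810; 0; 0; 3810; 3810; 3810; 0; 3810; 3810; 0; 3820; 70590; 6090; 0; 3810; 41462; 0; 0; 3810; 12270; 5970; 0; 3810; 45270; 0; 0; 3800; 38762; 5550; 0; 3780; 11910; 0; 0];
[:: 3799; 70562; 3810; 3810; 3762; 11940; 3802; 3772; 3772; 11670; 3772; 3802; 3782; 46012; 3810; 3772; 3810; 11970; 3772; 3802; 3810; 11320; 3810; 3820; 3810; 70590; 3802; 3742; 3810; 11992; 3810; 3810; 3810; 11670; 3810; 3810; 3810; 46020; 3810; 3810; 3792; 12022; 3810; 3810; 3772; 11340; 3810; 3810];
[:: 8130; 6090; 14760; 112740; 7530; 6240; 12150; 54360; 7920; 6150; 13890; 66300; 7530; 6120; 14790; 117180; 7972; 6268; 12150; 52680; 7440; 6180; 13912; 70590; 70590; 12278; 6112; 14760; 112740; 7522; 6240; 12150; 54382; 7920; 6172; 13890; 66302; 7582; 6112; 14790; 117192; 7950; 6210; 12142; 52680; 7440; 6180; 13920];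
[:: 0; 0; 3810; 0; 0; 0; 3810; 5648; 0; 0; 3810; 0; 0; 0; 3810; 4860; 0; 0; 3810; 0; 0; 0; 3810; 6090; 3802; 6112; 0; 0; 3810; 0; 0; 0; 3810; 5640; 0; 0; 3802; 0; 0; 0; 3810; 4812; 0; 0; 3810; 0; 0; 0];
[:: 0; 3800; 3810; 0; 0; 3762; 8280; 0; 0; 3810; 3810; 0; 0; 3810; 8670; 0; 0; 3810; 3792; 0; 0; 3810; 14812; 0; 3742; 14760; 0; 0; 3810; 3792; 0; 0; 3810; 8280; 0; 0; 3810; 3810; 0; 0; 3782; 8622; 0; 0; 3762; 3810; 0; 0];
[:: 3810; 41490; 3810; 3810; 3812; 59010; 3810; 3810; 3810; 93420; 3782; 3810; 3810; 39002; 3812; 3810; 3782; 59130; 3810; 3810; 3810; 112752; 3782; 3810; 3810; 112740; 3810; 3810; 3808; 41490; 3782; 3722; 3810; 59010; 3812; 3782; 3810; 93422; 3810; 3810; 3802; 38970; 3810; 3782; 3810; 59130; 3810; 3782];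
[:: 0; 0; 3810; 5760; 6542; 0; 3810; 11950; 0; 0; 3792; 42180; 5160; 0; 3810; 5760; 0; 0; 3762; 11940; 7530; 0; 3810; 41462; 11992; 7522; 0; 3792; 41490; 0; 0; 3792; 5760; 6570; 0; 3810; 11940; 0; 0; 3810; 42212; 5160; 0; 3810; 5712; 0; 0; 3810];
[:: 0; 0; 3810; 5550; 0; 0; 3772; 0; 0; 0; 3810; 5562; 0; 0; 3810; 0; 0; 0; 3810; 6232; 0; 0; 3810; 0; 3810; 6240; 0; 0; 3782; 0; 0; 0; 3792; 5550; 0; 0; 3810; 0; 0; 0; 3810; 5550; 0; 0; 3762; 0; 0; 0];
[:: 0; 3810; 11670; 0; 0; 3810; 3810; 0; 0; 3810; 11910; 0; 0; 3810; 3810; 0; 0; 3810; 12172; 0; 0; 3810; 3810; 0; 3810; 12150; 0; 0; 3722; 3792; 0; 0; 3840; 11670; 0; 0; 3810; 3792; 0; 0; 3810; 11910; 0; 0; 3810; 3810; 0; 0];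
[:: 3804; 12270; 3810; 3810; 3810; 44952; 3792; 3810; 3782; 5742; 3810; 3810; 3810; 11910; 3792; 3792; 3810; 54360; 3792; 3810; 3810; 5730; 3810; 3810; 3810; 54382; 3810; 3810; 3810; 5760; 3792; 3840; 3810; 12212; 3810; 3810; 3772; 44910; 3810; 3822; 3810; 5760; 3810; 3822; 3810; 11952; 3810; 3810];
[:: 6630; 6032; 9330; 11682; 7352; 5642; 8280; 59760; 6782; 5520; 11702; 12210; 6360; 5972; 9330; 11652; 7932; 5640; 8252; 59062; 6570; 5528; 11702; 12270; 11670; 7920; 5640; 8280; 59010; 6570; 5550; 11670; 12212; 9358; 5970; 9302; 11640; 7410; 5670; 8280; 59760; 6780; 5522; 11670; 12212; 6332; 5970; 9302];
[:: 0; 0; 3810; 0; 0; 0; 3782; 5988; 0; 0; 3762; 0; 0; 0; 3810; 6150; 0; 0; 3810; 0; 0; 0; 3762; 5970; 3810; 6172; 0; 0; 3812; 0; 0; 0; 3810; 5970; 0; 0; 3810; 0; 0; 0; 3810; 5970; 0; 0; 3810; 0; 0; 0];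
[:: 0; 3760; 3810; 0; 0; 3810; 5550; 0; 0; 3810; 3810; 0; 0; 3810; 13912; 0; 0; 3810; 3762; 0; 0; 3792; 9330; 0; 3810; 13890; 0; 0; 3782; 3810; 0; 0; 3810; 9302; 0; 0; 3810; 3792; 0; 0; 3812; 5532; 0; 0; 3792; 3822; 0; 0];
[:: 3799; 45232; 3810; 3772; 3792; 11970; 3810; 3802; 3802; 11340; 3810; 3810; 3810; 66300; 3810; 3772; 3792; 11940; 3810; 3772; 3810; 11640; 3802; 3810; 3810; 66302; 3802; 3810; 3810; 11940; 3810; 3810; 3772; 11640; 3810; 3810; 3810; 45270; 3810; 3810; 3810; 11992; 3810; 3810; 3810; 11340; 3810; 3810];
[:: 0; 0; 3810; 94020; 7362; 0; 3810; 44640; 0; 0; 3792; 46020; 7530; 0; 3792; 93420; 0; 0; 3810; 44910; 7410; 0; 3810; 45270; 46020; 7582; 0; 3810; 93422; 0; 0; 3792; 44910; 7410; 0; 3792; 45270; 0; 0; 3762; 94010; 7410; 0; 3810; 44550; 0; 0; 3810];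
[:: 0; 0; 3810; 4848; 0; 0; 3810; 0; 0; 0; 3772; 6120; 0; 0; 3810; 0; 0; 0; 3810; 5670; 0; 0; 3772; 0; 3810; 6112; 0; 0; 3810; 0; 0; 0; 3810; 5670; 0; 0; 3810; 0; 0; 0; 3782; 4860; 0; 0; 3810; 0; 0; 0];
[:: 0; 3810; 8652; 0; 0; 3762; 3810; 0; 0; 3810; 14782; 0; 0; 3812; 3810; 0; 0; 3810; 8282; 0; 0; 3810; 3810; 0; 3810; 14790; 0; 0; 3810; 3810; 0; 0; 3822; 8280; 0; 0; 3810; 3762; 0; 0; 3810; 8670; 0; 0; 3810; 3792; 0; 0];
[:: 3809; 38700; 3782; 3810; 3810; 59940; 3810; 3782; 3810; 117180; 3752; 3810; 3810; 42180; 3782; 3782; 3810; 59812; 3810; 3810; 3810; 94020; 3810; 3800; 3792; 117192; 3810; 3782; 3802; 42212; 3810; 3810; 3810; 59760; 3810; 3812; 3810; 94010; 3782; 3810; 3810; 38700; 3810; 3812; 3810; 59942; 3782; 3810];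
[:: 5190; 5592; 11910; 5760; 6510; 6012; 5550; 11970; 7950; 4860; 8670; 38970; 5142; 5550; 11892; 5760; 6780; 5970; 5550; 11970; 7410; 4860; 8670; 38762; 12022; 7950; 4812; 8622; 38970; 5160; 5550; 11910; 5760; 6780; 5970; 5532; 11992; 7410; 4860; 8670; 38700; 6618; 5550; 11910; 5802; 6462; 5970; 5532];
[:: 0; 0; 3810; 0; 0; 0; 3810; 6210; 0; 0; 3810; 0; 0; 0; 3792; 5520; 0; 0; 3802; 0; 0; 0; 3810; 5550; 3810; 6210; 0; 0; 3810; 0; 0; 0; 3810; 5522; 0; 0; 3810; 0; 0; 0; 3810; 5550; 0; 0; 3792; 0; 0; 0];
[:: 0; 3810; 3810; 0; 0; 3810; 12150; 0; 0; 3810; 3792; 0; 0; 3810; 11670; 0; 0; 3810; 3762; 0; 0; 3810; 11892; 0; 3810; 12142; 0; 0; 3782; 3810; 0; 0; 3822; 11670; 0; 0; 3810; 3810; 0; 0; 3812; 11910; 0; 0; 3810; 3810; 0; 0];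
[:: 3804; 11910; 3810; 3810; 3810; 52642; 3762; 3810; 3810; 5760; 3810; 3762; 3762; 12210; 3810; 3810; 3810; 44640; 3792; 3810; 3812; 5760; 3810; 3780; 3772; 52680; 3810; 3762; 3810; 5712; 3762; 3810; 3810; 12212; 3810; 3792; 3810; 44550; 3810; 3810; 3810; 5802; 3792; 3810; 3810; 11952; 3810; 3822];
[:: 0; 0; 3810; 11340; 7462; 0; 3810; 59090; 0; 0; 3762; 11910; 6360; 0; 3810; 11302; 0; 0; 3810; 59940; 6510; 0; 3792; 11910; 11340; 7440; 0; 3810; 59130; 0; 0; 3810; 11952; 6332; 0; 3822; 11340; 0; 0; 3792; 59942; 6462; 0; 3810; 11952; 0; 0; 3792];
[:: 0; 0; 3772; 6178; 0; 0; 3812; 0; 0; 0; 3810; 5970; 0; 0; 3802; 0; 0; 0; 3810; 5970; 0; 0; 3792; 0; 3810; 6180; 0; 0; 3810; 0; 0; 0; 3810; 5970; 0; 0; 3810; 0; 0; 0; 3782; 5970; 0; 0; 3810; 0; 0; 0];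
[:: 0; 3810; 13920; 0; 0; 3810; 3810; 0; 0; 3810; 9330; 0; 0; 3772; 3810; 0; 0; 3810; 5550; 0; 0; 3810; 3810; 0; 3810; 13920; 0; 0; 3782; 3810; 0; 0; 3810; 9302; 0; 0; 3810; 3810; 0; 0; 3810; 5532; 0; 0; 3822; 3792; 0; 0]].
Definition cert_W : seq (seq Z) := [::
[:: 884736; 0; -12837; 0; 0; 0; 72738; 0; 0; 0; -612; 0; 0; 0; -13347; 0; 0; 0; 71568; 0; 0; 0; -1257; 0; 63679; 533070; -98304; -98304; 243720; -98304; -98304; -98304; -143496; 280440; -98304; -98304; 39109; -98304; -98304; -98304; 242909; -139800; -98304; -98304; -146346; -98304; -98304; -98304];
[:: 0; 884736; 23118; 51360; -14484; 0; 56070; 105690; 0; 0; -46680; -80028; 49434; 0; 38160; 48582; 0; 0; 47460; 110520; 41904; 0; -34800; -72378; 503102; -124050; -98304; 191282; -76230; -98304; -98304; -139758; 135420; -29248; -98304; 36532; -175418; -98304; -98304; 180942; -346680; -123408; -98304; -122178; -237630; -98304; -98304; 34872];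
[:: -12837; 23118; 887250; 97290; 156240; 62400; -105000; -15540; 40500; 58140; -67200; -34620; -71790; 48510; 150210; 98790; 69210; 55968; 8820; -7350; 238770; 54420; -280800; -43290; -28650; 16350; 57090; -314280; -66690; -4440; -215460; 279660; -8520; -44460; 80250; -165690; -17940; -138780; 68070; -11388; -54628; 50760; -220200; -139260; 9960; -37380; 79792; 430320];
[:: 0; 51360; 97290; 884736; 0; 24570; -104040; 94524; 0; 86760; -43800; 0; 0; 50382; 93960; 143994; 0; 8922; -113970; 0; 0; 86832; -50010; -51276; -140220; 146100; -98304; -98304; -169320; -207078; 90474; -98304; -89670; 124902; -98304; -98304; -130808; -11418; -200238; -98304; -171540; -30660; -98304; -98304; -82530; -75498; 540352; -98304];
[:: 0; -14484; 156240; 0; 884736; -10254; -175320; 0; 0; 19980; 243720; 0; 0; -22140; 156660; 0; 0; -9774; -175560; 0; 0; 25236; 243720; 0; 264882; -40920; -98304; -98304; -129628; 288152; -98304; -98304; 134400; -9808; -98304; -98304; 288042; -191958; -98304; -98304; -143130; -59610; -98304; -98304; 115410; 549232; -98304; -98304];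
[:: 0; 0; 62400; 24570; -10254; 884736; -31920; -85830; 0; 0; 99210; -63630; 17940; 0; 64470; 28110; 0; 0; -36270; -87900; -115230; 0; 107280; -69270; -42690; -28590; -98304; -57498; 38070; -98304; -98304; 54420; -289878; -69448; -98304; 302100; -188340; -98304; -98304; -71748; -4290; -184368; -98304; 48990; 424012; -98304; -98304; 298770];
[:: 72738; 56070; -105000; -104040; -175320; -31920; 741600; 10530; 25740; 25710; -63810; -84540; -61260; 36810; 8790; -120060; 31620; -16290; 122520; 21420; -139530; 21840; -71400; -91410; 43012; 40980; -79830; 200010; 50550; -177540; 86122; -111360; -89688; 56670; 69872; -24600; 35310; -63420; -73920; 73770; 47010; -46950; 75270; 502110; -92718; -77250; 86882; -42180];
[:: 0; 105690; -15540; 94524; 0; -85830; 10530; 884736; 0; -11178; -71430; -31386; 0; 111402; -10140; 0; 0; -91380; 17970; -30606; 0; -8850; -69930; 0; -54878; -140730; 168032; -98304; -157860; -76238; -98304; -98304; -77250; 326340; -126558; -98304; -43118; -160758; -98304; -98304; -171628; 31830; 545094; -98304; -78810; 81812; -98304; -98304];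
[:: 0; 0; 40500; 0; 0; 0; 25740; 0; 884736; 0; -1200; 0; 0; 0; 40620; 0; 0; 0; 26010; 0; 0; 0; -1050; 0; -81458; 368340; -98304; -98304; 152010; -98304; -98304; -98304; 115652; -107248; -98304; -98304; -79838; -98304; -98304; -98304; 137460; 438150; -98304; -98304; 115380; -98304; -98304; -98304];
[:: 0; 0; 58140; 86760; 19980; 0; 25710; -11178; 0; 884736; -12192; -51990; -71154; 0; 47130; 89460; 0; 0; 30600; -11670; 74790; 0; -21450; -55200; 237480; -126270; -98304; 38640; -146940; -98304; -98304; 265380; -43368; -157110; -98304; -168570; -250710; -98304; -98304; 54120; 223650; -75540; -98304; 266310; -209340; -98304; -98304; -161940];
[:: -612; -46680; -67200; -43800; 243720; 99210; -63810; -71430; -1200; -12192; 911430; 51300; -75060; -36420; -281640; -52800; -34800; 101520; -72240; -75240; 124980; -12462; 143490; 43998; -81098; 75030; 32520; -126150; 79982; 20922; 160920; -68520; -16890; 5342; -141288; -159630; -87900; 18792; 34912; 520132; 83972; -32790; 152400; -116568; -5550; -127578; -139680; 299550];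
[:: 0; -80028; -34620; 0; 0; -63630; -84540; -31386; 0; -51990; 51300; 884736; 0; -93150; -37920; -52650; 0; -54780; -95112; 0; 0; -57540; 44640; -101940; -18008; 90150; -98304; -98304; -51540; 16650; -25008; -98304; -33630; -9990; -98304; -98304; -23040; 85590; 643230; -98304; -67680; 281310; -98304; -98304; -45588; -70470; 186630; -98304];
[:: 0; 49434; -71790; 0; 0; 17940; -61260; 0; 0; -71154; -75060; 0; 884736; 52506; -71700; 0; 0; 12666; -61260; 0; 0; -72840; -75150; 0; 151772; -90270; -98304; -98304; 101820; -224520; -98304; -98304; 17070; -86490; -98304; -98304; 153150; 544980; -98304; -98304; 99150; 68082; -98304; -98304; 7002; 322620; -98304; -98304];
[:: 0; 0; 48510; 50382; -22140; 0; 36810; 111402; 0; 0; -36420; -93150; 52506; 884736; 36030; 56070; 0; 0; 42210; 120810; 41160; 0; -46800; -89460; -194678; -152100; -98304; 202140; -400318; -98304; -98304; -144270; -247740; -39538; -98304; 41160; 525180; -98304; -98304; 210152; -99120; -136140; -98304; -159540; 151290; -98304; -98304; 41332];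
[:: -13347; 38160; 150210; 93960; 156660; 64470; 8790; -10140; 40620; 47130; -281640; -37920; -71700; 36030; 885960; 101880; 68250; 52650; -104190; -11310; 239370; 62508; -68010; -36390; -26550; 16260; 63150; -12150; -57238; -4680; -221370; -138420; -2208; -43740; 82410; 429412; -20430; -139098; 64410; -314880; -69388; 49452; -214038; 278670; 6780; -36630; 77902; -166530];
[:: 0; 48582; 98790; 143994; 0; 28110; -120060; 0; 0; 89460; -52800; -52650; 0; 56070; 101880; 884736; 0; 11790; -108600; 95250; 0; 88260; -44790; 0; -142418; 133110; -207840; -98304; -188910; -213030; -98304; -98304; -88158; 119352; 551400; -98304; -134918; -15360; -98304; -98304; -196408; -34350; 87600; -98304; -82800; -80288; -98304; -98304];
[:: 0; 0; 69210; 0; 0; 0; 31620; 0; 0; 0; -34800; 0; 0; 0; 68250; 0; 884736; 0; 30900; 0; 0; 0; -34560; 0; 191790; 24502; -98304; -98304; 9842; -98304; -98304; -98304; -21810; 340212; -98304; -98304; 193722; -98304; -98304; -98304; -5550; 334410; -98304; -98304; -8700; -98304; -98304; -98304];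
[:: 0; 0; 55968; 8922; -9774; 0; -16290; -91380; 0; 0; 101520; -54780; 12666; 0; 52650; 11790; 0; 884736; -14280; -91740; -119760; 0; 93180; -57990; -166170; -37142; -98304; -74580; -20070; -98304; -98304; 61110; 437430; -83160; -98304; 298440; -47880; -98304; -98304; -58770; 45562; -176190; -98304; 67890; -300690; -98304; -98304; 300960];
[:: 71568; 47460; 8820; -113970; -175560; -36270; 122520; 17970; 26010; 30600; -72240; -95112; -61260; 42210; -104190; -108600; 30900; -14280; 739260; 13200; -138720; 17208; -63450; -78600; 41932; 40890; -69900; 73572; 38670; -176508; 74610; 500482; -85878; 55442; 80700; -41598; 35640; -63030; -82920; 198872; 61350; -44220; 87472; -111138; -98268; -77190; 79950; -25170];
[:: 0; 110520; -7350; 0; 0; -87900; 21420; -30606; 0; -11670; -75240; 0; 0; 120810; -11310; 95250; 0; -91740; 13200; 884736; 0; -12390; -78990; -31650; -54968; -147840; -98304; -98304; -164910; -76920; 541702; -98304; -76470; 331162; -98304; -98304; -42458; -165990; 163470; -98304; -176580; 29220; -98304; -98304; -79200; 81540; -119040; -98304];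
[:: 0; 41904; 238770; 0; 0; -115230; -139530; 0; 0; 74790; 124980; 0; 0; 41160; 239370; 0; 0; -119760; -138720; 0; 884736; 65760; 124560; 0; -15780; -9630; -98304; -98304; 9390; 512640; -98304; -98304; 266670; -81420; -98304; -98304; -22050; 270390; -98304; -98304; 15630; 8580; -98304; -98304; 276152; -137520; -98304; -98304];
[:: 0; 0; 54420; 86832; 25236; 0; 21840; -8850; 0; 0; -12462; -57540; -72840; 0; 62508; 88260; 0; 0; 17208; -12390; 65760; 884736; -8070; -62490; -237290; -115140; -98304; 57030; 223002; -98304; -98304; 260190; -227520; -161932; -98304; -152658; 241410; -98304; -98304; 42330; -150240; -72990; -98304; 255600; -37590; -98304; -98304; -156960];
[:: -1257; -34800; -280800; -50010; 243720; 107280; -71400; -69930; -1050; -21450; 143490; 44640; -75150; -46800; -68010; -44790; -34560; 93180; -63450; -78990; 124560; -8070; 910410; 49260; -78210; 76822; 35850; 519832; 82652; 21270; 155820; -117090; -9660; 6062; -133158; 299910; -90068; 19140; 30082; -125730; 79800; -34080; 157920; -69198; -9480; -126888; -144198; -158130];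
[:: 0; -72378; -43290; -51276; 0; -69270; -91410; 0; 0; -55200; 43998; -101940; 0; -89460; -36390; 0; 0; -57990; -78600; -31650; 0; -62490; 49260; 884736; -14090; 80670; 646230; -98304; -46110; 21212; -98304; -98304; -35700; 1620; 183090; -98304; -19380; 82680; -98304; -98304; -63160; 279572; -25590; -98304; -52260; -66840; -98304; -98304];
[:: 63679; 503102; -28650; -140220; 264882; -42690; 43012; -54878; -81458; 237480; -81098; -18008; 151772; -194678; -26550; -142418; 191790; -166170; 41932; -54968; -15780; -237290; -78210; -14090; 888450; 38820; -39968; 50422; 20640; 86842; -150390; -39000; 70500; -61920; -34080; -55920; -173850; 76320; -41130; 55530; -34338; 101572; -149970; -26790; -132398; 280020; -34350; -53550];
[:: 533070; -124050; 16350; 146100; -40920; -28590; 40980; -140730; 368340; -126270; 75030; 90150; -90270; -152100; 16260; 133110; 24502; -37142; 40890; -147840; -9630; -115140; 76822; 80670; 38820; 932708; -63428; -77430; 417330; -12968; -54360; -82710; 162052; 77880; 33622; -45690; 7262; 4042; -32378; -77640; 429672; -3900; -49200; -84248; 182580; -80850; 33540; -48390];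
[:: -98304; -98304; 57090; -98304; -98304; -98304; -79830; 168032; -98304; -98304; 32520; -98304; -98304; -98304; 63150; -207840; -98304; -98304; -69900; -98304; -98304; -98304; 35850; 646230; -39968; -63428; 884736; 0; -8670; 0; 0; 0; -30900; 46200; 0; 0; -44858; 0; 0; 0; -16050; 86772; 0; 0; -33990; 0; 0; 0];
[:: -98304; 191282; -314280; -98304; -98304; -57498; 200010; -98304; -98304; 38640; -126150; -98304; -98304; 202140; -12150; -98304; -98304; -74580; 73572; -98304; -98304; 57030; 519832; -98304; 50422; -77430; 0; 884736; -14100; 96402; 0; 0; -62640; -124380; 0; 0; 63510; 68640; 0; 0; -3388; -151668; 0; 0; -43218; -192930; 0; 0];
[:: 243720; -76230; -66690; -169320; -129628; 38070; 50550; -157860; 152010; -146940; 79982; -51540; 101820; -400318; -57238; -188910; 9842; -20070; 38670; -164910; 9390; 223002; 82652; -46110; 20640; 417330; -8670; -14100; 856048; 186090; 41942; 40202; -5970; 89520; -178; -9508; -50820; 293372; -13320; -27540; 257782; 250080; 35910; 53672; 5850; 69330; 5520; -2788];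
[:: -98304; -98304; -4440; -207078; 288152; -98304; -177540; -76238; -98304; -98304; 20922; 16650; -224520; -98304; -4680; -213030; -98304; -98304; -176508; -76920; 512640; -98304; 21270; 21212; 86842; -12968; 0; 96402; 186090; 884736; 0; -75078; 237990; -75660; 0; 22530; 91350; 0; 0; 97350; 213542; -40170; 0; -75360; 225762; 0; 0; 22080];
[:: -98304; -98304; -215460; 90474; -98304; -98304; 86122; -98304; -98304; -98304; 160920; -25008; -98304; -98304; -221370; -98304; -98304; -98304; 74610; 541702; -98304; -98304; 155820; -98304; -150390; -54360; 0; 0; 41942; 0; 884736; 0; 28512; 202530; 0; 0; -154530; 0; 0; 0; 39540; -35460; 0; 0; 30312; 0; 0; 0];
[:: -98304; -139758; 279660; -98304; -98304; 54420; -111360; -98304; -98304; 265380; -68520; -98304; -98304; -144270; -138420; -98304; -98304; 61110; 500482; -98304; -98304; 260190; -117090; -98304; -39000; -82710; 0; 0; 40202; -75078; 0; 884736; -21150; -154650; 0; 0; -44730; -22218; 0; 0; 62100; -177540; 0; 0; -6750; 69390; 0; 0];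
[:: -143496; 135420; -8520; -89670; 134400; -289878; -89688; -77250; 115652; -43368; -16890; -33630; 17070; -247740; -2208; -88158; -21810; 437430; -85878; -76470; 266670; -227520; -9660; -35700; 70500; 162052; -30900; -62640; -5970; 237990; 28512; -21150; 975120; -5968; -54930; 45720; -145118; 259260; -24000; -60588; 20970; -118890; 34320; -3438; -220680; 121602; -54720; 53490];
[:: 280440; -29248; -44460; 124902; -9808; -69448; 56670; 326340; -107248; -157110; 5342; -9990; -86490; -39538; -43740; 119352; 340212; -83160; 55442; 331162; -81420; -161932; 6062; 1620; -61920; 77880; 46200; -124380; 89520; -75660; 202530; -154650; -5968; 782608; -22770; -124378; -71400; -129510; 37050; -124470; 86850; -96090; 200582; -152940; -10228; -105058; -16020; -124738];
[:: -98304; -98304; 80250; -98304; -98304; -98304; 69872; -126558; -98304; -98304; -141288; -98304; -98304; -98304; 82410; 551400; -98304; -98304; 80700; -98304; -98304; -98304; -133158; 183090; -34080; 33622; 0; 0; -178; 0; 0; 0; -54930; -22770; 884736; 0; -22950; 0; 0; 0; -150; 106140; 0; 0; -62100; 0; 0; 0];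
[:: -98304; 36532; -165690; -98304; -98304; 302100; -24600; -98304; -98304; -168570; -159630; -98304; -98304; 41160; 429412; -98304; -98304; 298440; -41598; -98304; -98304; -152658; 299910; -98304; -55920; -45690; 0; 0; -9508; 22530; 0; 0; 45720; -124378; 0; 884736; -49920; -50058; 0; 0; 5552; -127788; 0; 0; 54762; -348; 0; 0];
[:: 39109; -175418; -17940; -130808; 288042; -188340; 35310; -43118; -79838; -250710; -87900; -23040; 153150; 525180; -20430; -134918; 193722; -47880; 35640; -42458; -22050; 241410; -90068; -19380; -173850; 7262; -44858; 63510; -50820; 91350; -154530; -44730; -145118; -71400; -22950; -49920; 937590; 59970; -44910; 55710; -8760; 126352; -155550; -57540; 55770; 298230; -22770; -51060];
[:: -98304; -98304; -138780; -11418; -191958; -98304; -63420; -160758; -98304; -98304; 18792; 85590; 544980; -98304; -139098; -15360; -98304; -98304; -63030; -165990; 270390; -98304; 19140; 82680; 76320; 4042; 0; 68640; 293372; 0; 0; -22218; 259260; -129510; 0; -50058; 59970; 884736; 0; 67902; 292730; -13230; 0; -22050; 264840; 0; 0; -48870];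
[:: -98304; -98304; 68070; -200238; -98304; -98304; -73920; -98304; -98304; -98304; 34912; 643230; -98304; -98304; 64410; -98304; -98304; -98304; -82920; 163470; -98304; -98304; 30082; -98304; -41130; -32378; 0; 0; -13320; 0; 0; 0; -24000; 37050; 0; 0; -44910; 0; 884736; 0; -16798; 76620; 0; 0; -24420; 0; 0; 0];
[:: -98304; 180942; -11388; -98304; -98304; -71748; 73770; -98304; -98304; 54120; 520132; -98304; -98304; 210152; -314880; -98304; -98304; -58770; 198872; -98304; -98304; 42330; -125730; -98304; 55530; -77640; 0; 0; -27540; 97350; 0; 0; -60588; -124470; 0; 0; 55710; 67902; 0; 884736; 13290; -151140; 0; 0; -45660; -193188; 0; 0];
[:: 242909; -346680; -54628; -171540; -143130; -4290; 47010; -171628; 137460; 223650; 83972; -67680; 99150; -99120; -69388; -196408; -5550; 45562; 61350; -176580; 15630; -150240; 79800; -63160; -34338; 429672; -16050; -3388; 257782; 213542; 39540; 62100; 20970; 86850; -150; 5552; -8760; 292730; -16798; 13290; 857670; 198180; 27780; 47012; -1950; 53822; 4112; 1740];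
[:: -139800; -123408; 50760; -30660; -59610; -184368; -46950; 31830; 438150; -75540; -32790; 281310; 68082; -136140; 49452; -34350; 334410; -176190; -44220; 29220; 8580; -72990; -34080; 279572; 101572; -3900; 86772; -151668; 250080; -40170; -35460; -177540; -118890; -96090; 106140; -127788; 126352; -13230; 76620; -151140; 198180; 967728; -47610; -178170; -128358; 522; 106800; -124488];
[:: -98304; -98304; -220200; -98304; -98304; -98304; 75270; 545094; -98304; -98304; 152400; -98304; -98304; -98304; -214038; 87600; -98304; -98304; 87472; -98304; -98304; -98304; 157920; -25590; -149970; -49200; 0; 0; 35910; 0; 0; 0; 34320; 200582; 0; 0; -155550; 0; 0; 0; 27780; -47610; 884736; 0; 33072; 0; 0; 0];
[:: -98304; -122178; -139260; -98304; -98304; 48990; 502110; -98304; -98304; 266310; -116568; -98304; -98304; -159540; 278670; -98304; -98304; 67890; -111138; -98304; -98304; 255600; -69198; -98304; -26790; -84248; 0; 0; 53672; -75360; 0; 0; -3438; -152940; 0; 0; -57540; -22050; 0; 0; 47012; -178170; 0; 884736; -22170; 69540; 0; 0];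
[:: -146346; -237630; 9960; -82530; 115410; 424012; -92718; -78810; 115380; -209340; -5550; -45588; 7002; 151290; 6780; -82800; -8700; -300690; -98268; -79200; 276152; -37590; -9480; -52260; -132398; 182580; -33990; -43218; 5850; 225762; 30312; -6750; -220680; -10228; -62100; 54762; 55770; 264840; -24420; -45660; -1950; -128358; 33072; -22170; 980820; 107862; -62370; 42882];
[:: -98304; -98304; -37380; -75498; 549232; -98304; -77250; 81812; -98304; -98304; -127578; -70470; 322620; -98304; -36630; -80288; -98304; -98304; -77190; 81540; -137520; -98304; -126888; -66840; 280020; -80850; 0; -192930; 69330; 0; 0; 69390; 121602; -105058; 0; -348; 298230; 0; 0; -193188; 53822; 522; 0; 69540; 107862; 884736; 0; -1098];
[:: -98304; -98304; 79792; 540352; -98304; -98304; 86882; -98304; -98304; -98304; -139680; 186630; -98304; -98304; 77902; -98304; -98304; -98304; 79950; -119040; -98304; -98304; -144198; -98304; -34350; 33540; 0; 0; 5520; 0; 0; 0; -54720; -16020; 0; 0; -22770; 0; 0; 0; 4112; 106800; 0; 0; -62370; 0; 884736; 0];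
[:: -98304; 34872; 430320; -98304; -98304; 298770; -42180; -98304; -98304; -161940; 299550; -98304; -98304; 41332; -166530; -98304; -98304; 300960; -25170; -98304; -98304; -156960; -158130; -98304; -53550; -48390; 0; 0; -2788; 22080; 0; 0; 53490; -124738; 0; 0; -51060; -48870; 0; 0; 1740; -124488; 0; 0; 42882; -1098; 0; 884736]].
Definition cert_L : seq (seq Z) := [::
[:: 1048576; 0; 0; 0; 0; 0; 0; 0; 0; 0; 0; 0; 0; 0; 0; 0; 0; 0; 0; 0; 0; 0; 0; 0; 0; 0; 0; 0; 0; 0; 0; 0; 0; 0; 0; 0; 0; 0; 0; 0; 0; 0; 0; 0; 0];
[:: -205119; 1048576; 0; 0; 0; 0; 0; 0; 0; 0; 0; 0; 0; 0; 0; 0; 0; 0; 0; 0; 0; 0; 0; 0; 0; 0; 0; 0; 0; 0; 0; 0; 0; 0; 0; 0; 0; 0; 0; 0; 0; 0; 0; 0; 0];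
[:: 69621; -3218; 1048576; 0; 0; 0; 0; 0; 0; 0; 0; 0; 0; 0; 0; 0; 0; 0; 0; 0; 0; 0; 0; 0; 0; 0; 0; 0; 0; 0; 0; 0; 0; 0; 0; 0; 0; 0; 0; 0; 0; 0; 0; 0; 0];
[:: -307429; -301927; -23005; 1048576; 0; 0; 0; 0; 0; 0; 0; 0; 0; 0; 0; 0; 0; 0; 0; 0; 0; 0; 0; 0; 0; 0; 0; 0; 0; 0; 0; 0; 0; 0; 0; 0; 0; 0; 0; 0; 0; 0; 0; 0; 0];
[:: -22922; -4655; -105305; -3484; 1048576; 0; 0; 0; 0; 0; 0; 0; 0; 0; 0; 0; 0; 0; 0; 0; 0; 0; 0; 0; 0; 0; 0; 0; 0; 0; 0; 0; 0; 0; 0; 0; 0; 0; 0; 0; 0; 0; 0; 0; 0];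
[:: 43598; 8854; -2877; 61667; 848; 1048576; 0; 0; 0; 0; 0; 0; 0; 0; 0; 0; 0; 0; 0; 0; 0; 0; 0; 0; 0; 0; 0; 0; 0; 0; 0; 0; 0; 0; 0; 0; 0; 0; 0; 0; 0; 0; 0; 0; 0];
[:: 64559; 33060; -4201; 80801; -16650; -6145; 1048576; 0; 0; 0; 0; 0; 0; 0; 0; 0; 0; 0; 0; 0; 0; 0; 0; 0; 0; 0; 0; 0; 0; 0; 0; 0; 0; 0; 0; 0; 0; 0; 0; 0; 0; 0; 0; 0; 0];
[:: -84379; 94522; 119667; -140756; -79903; 2756; -10300; 1048576; 0; 0; 0; 0; 0; 0; 0; 0; 0; 0; 0; 0; 0; 0; 0; 0; 0; 0; 0; 0; 0; 0; 0; 0; 0; 0; 0; 0; 0; 0; 0; 0; 0; 0; 0; 0; 0];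
[:: -45665; -9274; -77325; -183355; -51478; 9038; -55248; 42204; 1048576; 0; 0; 0; 0; 0; 0; 0; 0; 0; 0; 0; 0; 0; 0; 0; 0; 0; 0; 0; 0; 0; 0; 0; 0; 0; 0; 0; 0; 0; 0; 0; 0; 0; 0; 0; 0];
[:: -137958; -28018; 25944; -191219; -972; 13591; -70250; -142552; -25753; 1048576; 0; 0; 0; 0; 0; 0; 0; 0; 0; 0; 0; 0; 0; 0; 0; 0; 0; 0; 0; 0; 0; 0; 0; 0; 0; 0; 0; 0; 0; 0; 0; 0; 0; 0; 0];
[:: 53151; -21219; -3602; 73031; 129902; -5036; -4424; -25393; -101023; 71986; 1048576; 0; 0; 0; 0; 0; 0; 0; 0; 0; 0; 0; 0; 0; 0; 0; 0; 0; 0; 0; 0; 0; 0; 0; 0; 0; 0; 0; 0; 0; 0; 0; 0; 0; 0];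
[:: 157244; -180798; 61286; 4810; -7836; 38760; 47746; -716824; -9402; -230474; 25909; 1048576; 0; 0; 0; 0; 0; 0; 0; 0; 0; 0; 0; 0; 0; 0; 0; 0; 0; 0; 0; 0; 0; 0; 0; 0; 0; 0; 0; 0; 0; 0; 0; 0; 0];
[:: 112862; 22921; 21513; -160380; 4403; 1487; 103338; -77018; -72882; -10463; 58337; 96422; 1048576; 0; 0; 0; 0; 0; 0; 0; 0; 0; 0; 0; 0; 0; 0; 0; 0; 0; 0; 0; 0; 0; 0; 0; 0; 0; 0; 0; 0; 0; 0; 0; 0];
[:: 77713; 15783; -5128; 89876; 1466; -6927; -10008; -32900; 15058; 18251; -8948; 115473; -3963; 1048576; 0; 0; 0; 0; 0; 0; 0; 0; 0; 0; 0; 0; 0; 0; 0; 0; 0; 0; 0; 0; 0; 0; 0; 0; 0; 0; 0; 0; 0; 0; 0];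
[:: 61992; -4176; -4141; -10405; -113263; -2060; -5002; 114434; -81458; 32441; 4313; 299602; -6615; -14323; 1048576; 0; 0; 0; 0; 0; 0; 0; 0; 0; 0; 0; 0; 0; 0; 0; 0; 0; 0; 0; 0; 0; 0; 0; 0; 0; 0; 0; 0; 0; 0];
[:: 5953; -238615; -48871; 108681; 11387; 23719; 33489; -53686; -109604; -84233; 29231; -921086; -102578; 75752; 100928; 1048576; 0; 0; 0; 0; 0; 0; 0; 0; 0; 0; 0; 0; 0; 0; 0; 0; 0; 0; 0; 0; 0; 0; 0; 0; 0; 0; 0; 0; 0];
[:: -13261; -2693; -108423; 20816; -52484; -501; -19981; -86215; -6541; -10284; 147681; -168125; 114788; 6580; -95067; -127390; 1048576; 0; 0; 0; 0; 0; 0; 0; 0; 0; 0; 0; 0; 0; 0; 0; 0; 0; 0; 0; 0; 0; 0; 0; 0; 0; 0; 0; 0];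
[:: 261372; 53082; -159118; -388816; -10955; 3574; 86539; -247239; -32673; -38221; 46571; 144030; -108604; -11414; -171448; -711077; -65446; 1048576; 0; 0; 0; 0; 0; 0; 0; 0; 0; 0; 0; 0; 0; 0; 0; 0; 0; 0; 0; 0; 0; 0; 0; 0; 0; 0; 0];
[:: 60138; 38676; -3890; 74325; -13936; -5752; -9043; -12030; -64307; -81820; -5316; 97083; 97296; -12091; -18544; 139766; -21790; 197836; 1048576; 0; 0; 0; 0; 0; 0; 0; 0; 0; 0; 0; 0; 0; 0; 0; 0; 0; 0; 0; 0; 0; 0; 0; 0; 0; 0];
[:: -724476; -36104; 171451; -460689; -88273; 43447; 39269; -4649; -27957; -284350; 25619; -132837; -36008; 48802; 172567; -410823; -113403; -473508; 112881; 1048576; 0; 0; 0; 0; 0; 0; 0; 0; 0; 0; 0; 0; 0; 0; 0; 0; 0; 0; 0; 0; 0; 0; 0; 0; 0];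
[:: -55967; -11366; -83366; -201200; -10159; 10138; -56825; 34917; -168367; -35622; -114523; -37397; -8974; 20117; -89263; -284720; -60761; -242220; -42647; -1543149; 1048576; 0; 0; 0; 0; 0; 0; 0; 0; 0; 0; 0; 0; 0; 0; 0; 0; 0; 0; 0; 0; 0; 0; 0; 0];
[:: -38571; 314301; -61607; 181120; -75645; -109750; 251643; -112956; 6843; 219395; -303220; -14453; -178781; 206487; -218207; 246740; -36278; -7564; -313947; 960331; 152968; 1048576; 0; 0; 0; 0; 0; 0; 0; 0; 0; 0; 0; 0; 0; 0; 0; 0; 0; 0; 0; 0; 0; 0; 0];
[:: 1889; -59387; -41812; 26062; -238327; 428868; -159622; 65546; 1728; -128956; -155231; 10929; 53896; 23172; -86480; 72731; -260655; 9297; -181064; 560768; 39762; -256724; 1048576; 0; 0; 0; 0; 0; 0; 0; 0; 0; 0; 0; 0; 0; 0; 0; 0; 0; 0; 0; 0; 0; 0];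
[:: 63311; -108416; -121695; -169828; 182977; -112662; -107746; 61381; -146845; -138497; -146373; 174274; -283080; -119119; -152043; -145938; -80416; -513393; -58905; -939423; 702585; -100076; -101287; 1048576; 0; 0; 0; 0; 0; 0; 0; 0; 0; 0; 0; 0; 0; 0; 0; 0; 0; 0; 0; 0; 0];
[:: -377976; -198037; -48426; 91266; -131765; -103375; 63579; -165958; -127723; -191050; 268052; -359864; -94506; -73570; -31382; -373038; -239193; -322576; 139818; 1294892; -74420; 277605; -198382; 180563; 1048576; 0; 0; 0; 0; 0; 0; 0; 0; 0; 0; 0; 0; 0; 0; 0; 0; 0; 0; 0; 0];
[:: -83773; -181634; -19916; -29660; -198581; 182817; -277642; 82466; -108509; 90764; -527835; 2686; -172443; 14194; -140590; 53283; -141939; 104525; 142924; 735591; -97133; -230543; 87666; -114026; -56365; 1048576; 0; 0; 0; 0; 0; 0; 0; 0; 0; 0; 0; 0; 0; 0; 0; 0; 0; 0; 0];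
[:: -9803; 345421; -115480; -187082; -116567; -112377; -120923; -24194; -70599; -316758; -77399; -35513; -289734; -108986; -130748; -443993; -130902; 647922; -181661; 157580; -93327; -41453; -171044; 23539; 279276; 238630; 1048576; 0; 0; 0; 0; 0; 0; 0; 0; 0; 0; 0; 0; 0; 0; 0; 0; 0; 0];
[:: -260552; -174190; -100323; -43433; -134618; -103294; -97098; 180739; -82222; -150927; -86276; -350451; -55452; -70453; -103346; -205243; 650269; -80418; -67380; -271820; -344933; -149795; 35734; 296252; -300066; -82415; -91483; 1048576; 0; 0; 0; 0; 0; 0; 0; 0; 0; 0; 0; 0; 0; 0; 0; 0; 0];
[:: 318444; -56601; 38943; -87244; -107363; -126303; 297397; -83660; -99338; -85560; -187286; -706987; -172346; -101966; 137976; 665479; -83899; -63971; 310861; -76562; -98852; -240572; -83352; 143884; -41648; -86788; -3355; 58158; 1048576; 0; 0; 0; 0; 0; 0; 0; 0; 0; 0; 0; 0; 0; 0; 0; 0];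
[:: -14651; 158129; -397600; -119968; -137292; 136356; -59475; -16632; -100684; 2799; -303489; 85619; -109837; -32880; 454030; -255067; -64088; 395098; -318168; 152026; -125539; -88263; -78139; 217086; 132656; -474862; -253915; -77581; 97872; 1048576; 0; 0; 0; 0; 0; 0; 0; 0; 0; 0; 0; 0; 0; 0; 0];
[:: -63917; -34151; -85336; 41012; 309586; -135015; -188068; 26015; -26453; -128184; -89792; -104596; 176065; 408967; -54814; -22002; 328495; -62889; -211065; 80175; -67058; -373550; 209879; 205429; -14915; 162041; -158223; -238430; -131100; -13269; 1048576; 0; 0; 0; 0; 0; 0; 0; 0; 0; 0; 0; 0; 0; 0];
[:: 90831; -102827; -123511; 110585; -169618; -124633; -129850; -148531; -122030; -128977; -119988; -104995; 695106; -127104; -123231; 208109; -235242; -108936; -224165; -484899; 153941; -11390; -209577; -310566; 60738; 82217; 288499; 558389; -1749; -26165; -84830; 1048576; 0; 0; 0; 0; 0; 0; 0; 0; 0; 0; 0; 0; 0];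
[:: -201412; -162179; 368428; -197110; -86239; -98551; -179166; -268732; -129305; -245694; 71021; 581668; -167777; -121012; 324201; 231396; -26021; -110296; -207103; 322732; -101520; 118216; -135496; -170840; -612634; -56175; 81187; -2054; 498781; 209; -174666; 139704; 1048576; 0; 0; 0; 0; 0; 0; 0; 0; 0; 0; 0; 0];
[:: -25845; 345420; -235981; 180201; -78786; -109079; -334918; -108887; -43930; 185888; 551967; 36360; -161554; 207126; -85952; 217304; -165045; -56024; 280888; -94397; 25492; -524388; -44252; -172237; -15191; 74544; 174651; -17195; -66340; -88586; -391320; 268455; 226874; 1048576; 0; 0; 0; 0; 0; 0; 0; 0; 0; 0; 0];
[:: -169435; -280305; -106705; -313526; -262740; -95493; -87492; -8057; -24273; 605010; -113250; -129736; -116676; -90201; -153327; -279997; -299879; 344782; -62237; -110032; -78136; -88265; -123522; 157026; -51275; -181958; -435926; -78185; 17172; 36119; 121737; 328834; 140522; 148519; 1048576; 0; 0; 0; 0; 0; 0; 0; 0; 0; 0];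
[:: 76358; -105767; -122555; -152534; -129381; -113661; -114496; 42758; 744339; -115167; -24265; 163069; -81522; -132028; -113336; 75230; 209402; -290257; -54606; 498852; -1596; -137006; -121850; -289231; 194723; -56899; 107641; -472021; 339424; 140972; 71850; 701659; -426426; -249081; 253251; 1048576; 0; 0; 0; 0; 0; 0; 0; 0; 0];
[:: -23813; -126110; -88780; 58673; -127792; -117555; 59451; 627292; -150479; -30196; 268231; 38806; -95044; -96685; -185024; 584063; -101849; 241110; -10574; 47838; -79853; 287272; -195493; 182377; -171102; -63961; 341364; -337155; -398514; 162811; -51075; 327129; 594975; -477574; -10228; 312765; 1048576; 0; 0; 0; 0; 0; 0; 0; 0];
[:: -69407; -195370; -72506; -37070; -220131; 165160; 136877; 97641; -111844; 121144; -159640; -57836; -242618; 4564; -56472; -34100; -201192; -24018; -267698; 371977; -169612; -582401; 161518; -81705; -171238; -18555; 582675; -99044; -50348; -514619; 250548; 365722; -191209; 183458; -197660; -373160; -771944; 1048576; 0; 0; 0; 0; 0; 0; 0];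
[:: 46164; -72194; -230180; -110532; 1015; 514941; -89058; -25609; 260122; 65494; -151525; 61274; -29350; 391247; -216683; -103685; -410; -218638; -40989; -620859; 195575; 126992; -413853; -464678; -182915; 333945; 86898; 232821; -129042; -351839; -589720; 49216; 30836; 351759; -140262; -636675; -139004; 448055; 1048576; 0; 0; 0; 0; 0; 0];
[:: -266184; -175333; -99951; -65718; 629338; -102784; -83441; 226855; -131113; -147616; -185744; -240123; 165435; -72982; -37624; -39059; -105366; -991; -114967; 125795; -181214; -199866; -55964; -527432; -181452; -90171; 63953; -593259; 403947; 51316; -264482; -492023; -349359; -62475; 482381; 121441; -590077; -34627; -145062; 1048576; 0; 0; 0; 0; 0];
[:: -170006; -155801; 64704; 733667; -114123; -137422; 289159; -91755; -21335; -50344; -216180; 539575; -71442; -174131; 21716; -43002; -59762; 63110; 265371; -343689; -86536; -227994; -91229; 149603; -344042; -92327; 79288; -36716; -279200; 161533; -131959; 55764; -1020221; -78602; 194179; 418308; -208917; -113109; -444742; 379253; 1048576; 0; 0; 0; 0];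
[:: 7308; 139161; 442519; -96053; -53813; 136532; -255534; -90107; -51119; -49384; 182249; -159111; -120705; -3829; -418732; -281594; -150141; 371231; -79050; -412632; -193741; -237938; 57754; 298050; -182109; -198228; -119256; -4012; 475503; -549798; 16571; 196295; -508163; -699555; 707620; 423062; 23229; -538075; -762252; 624623; 647842; 1048576; 0; 0; 0];
[:: -48945; 658422; -111945; 103926; 17930; -124870; -141108; -198332; -91107; 389798; -153613; 82565; -108180; -150666; -128059; 257570; 42359; -311025; -109546; 13958; -179492; -156359; -52782; -8245; -338831; -58908; -252538; 54793; 375118; 9455; -448772; 115203; -473487; -154108; -488345; 158369; -490946; 22662; -314779; 332691; 277795; 353780; 1048576; 0; 0];
[:: 90332; -102929; -123478; 140501; -128497; -125824; -130724; -140790; 226142; -115240; -93794; -92538; -85816; -137008; -98456; 114967; -182612; -252153; -108218; -1324040; -438944; 119108; 41768; -131610; 89738; -26136; -102567; -309441; -502288; -237162; 18623; -1140194; 428734; -142226; -223489; -1223119; 181400; -184190; 1045709; -235546; -790797; -328933; 408352; 1048576; 0];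
[:: 494795; -20786; 318517; 137025; -74565; -142049; -236364; 361404; -87973; -11924; 23299; -102825; -122061; -147694; 302056; -220497; -44354; -152939; -196314; 429979; -84513; 121596; -146102; -167153; 279498; 1050; -171078; 233224; -402118; 237; -252732; -124850; -666935; 421117; 211244; 7845; -1042161; -91799; -587520; 430683; 324511; 37714; 131268; -127969; 1048576]].
Definition cert_D : seq Z := [:: 882440; 849969; 879838; 590043; 874418; 880102; 875778; 866740; 853162; 827080; 852467; 384351; 835642; 868206; 822490; 346398; 816757; 466689; 834092; 76175; 590647; 338157; 539450; 186867; 219198; 324040; 226790; 208463; 183180; 261534; 243991; 107937; 99706; 97274; 112035; 60358; 63913; 193714; 24163; 21469; 16639; 32056; 13683; 47469; 14712].
Definition cert_scaleY : Z := 1099511627776.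
Definition cert_scaleW : Z := 3932160.

Local Close Scope Z_scope.
Local Open Scope nat_scope.

Definition zmx (t : seq (seq Z)) (i j : nat) : Z := nth 0%Z (nth [::] t i) j.

Fixpoint sumZ (f : nat -> Z) (n : nat) : Z :=
  if n is n'.+1 then (sumZ f n' + f n')%Z else 0%Z.

Definition allN (n : nat) (P : nat -> bool) : bool := all P (iota 0 n).

Lemma allNP (n : nat) (P : nat -> bool) : allN n P -> forall i, i < n -> P i.
Proof. by move=> /allP allP i lt_in; apply: allP; rewrite mem_iota. Qed.

(* Coordinates [p < 24] carry [a p], coordinates [24 + j] carry [b j].
   For [k < 24], [actN k] translates the [a]-block by [k] and the [b]-block by
   [-k]; for [k >= 24] it moreover swaps the two blocks.  Each of these maps
   preserves [i + j] of a cross pair [(a i, b j)], hence the form [M240]. *)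
Definition actN (k p : nat) : nat :=
  if k < 24 then
    if p < 24 then (p + k) %% 24 else 24 + (p - 24 + 24 - k) %% 24
  else
    if p < 24 then 24 + (p + (k - 24)) %% 24 else (p - 24 + 24 - (k - 24)) %% 24.

Definition act_invN (k i : nat) : nat :=
  if k < 24 then
    if i < 24 then (i + 24 - k) %% 24 else 24 + (i - 24 + k) %% 24
  else
    if i < 24 then 24 + (i + (k - 24)) %% 24 else (i - 24 + 24 - (k - 24)) %% 24.

Definition f24_table : seq nat :=
  [:: 2; 8; 0; 0; 4; 0; 0; 0; 0; 4; 0; 0; 2; 0; 0; 0; 4; 0; 0; 0; 0; 0; 0; 0].

(* [240 * M], where [z^T M z = 9/40 (|a|^2 + |b|^2) + (1/24) sum a_i b_j f(i+j)
   - (1/20) (sum a) (sum b)] for [z = (a, b)]. *)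
Definition M240 (i j : nat) : Z :=
  if (i < 24) == (j < 24) then (if i == j then 54 else 0)%Z
  else (5 * Z.of_nat (nth 0%nat f24_table ((i + j - 24) %% 24)) - 6)%Z.

(* The rows of [cert_V] are sparse; skipping their zero entries keeps the
   check [cert_W_split] fast. *)
Definition gramVYV (p q : nat) : Z :=
  sumZ (fun r => if (zmx cert_V p r =? 0)%Z then 0%Z
                 else sumZ (fun s => zmx cert_V p r * zmx cert_Y r s * zmx cert_V q s)%Z 45)
       45.

Definition residualY (r s : nat) : Z :=
  (cert_scaleY * zmx cert_Y r s
   - sumZ (fun t => zmx cert_L r t * nth 0%Z cert_D t * zmx cert_L s t)%Z 45)%Z.

Definition sym3Z (H : nat -> nat -> nat -> Z) (k i j : nat) : Z :=
  (H k i j + H k j i + H i k j + H i j k + H j k i + H j i k)%Z.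

Lemma act_bijN : allN 48 (fun k => allN 48 (fun p =>
  [&& act_invN k (actN k p) == p, actN k (act_invN k p) == p,
      actN k p < 48 & act_invN k p < 48])).
Proof. by vm_compute. Qed.

Lemma cert_N_ge0 : allN 48 (fun p => allN 48 (fun q => (0 <=? zmx cert_N p q)%Z)).
Proof. by vm_compute. Qed.

Lemma cert_W_split : allN 48 (fun p => allN 48 (fun q =>
  (zmx cert_W p q =? gramVYV p q + zmx cert_N p q)%Z)).
Proof. by vm_compute. Qed.

Lemma cert_Y_LDL : allN 45 (fun r => (0 <=? nth 0%Z cert_D r)%Z &&
  (sumZ (fun s => if s == r then 0%Z
                  else Z.abs (residualY r s) + Z.abs (residualY s r)) 45
   <=? 2 * residualY r r)%Z).
Proof. by vm_compute. Qed.

Lemma cert_sym3 : allN 48 (fun k => allN 48 (fun i => allN 48 (fun j =>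
  (240 * sym3Z (fun k i j => zmx cert_W (act_invN k i) (act_invN k j)) k i j
   =? cert_scaleW * sym3Z (fun _ => M240) k i j)%Z))).
Proof. by vm_compute. Qed.

Lemma f24_tableP : allN 24 (fun t =>
  count (fun n => n * n %% 24 == t) (iota 0 24) == nth 0 f24_table t).
Proof. by vm_compute. Qed.

Local Close Scope nat_scope.

Lemma Zr_sumZ (R : numDomainType) (f : nat -> Z) n :
  Zr (sumZ f n) = \sum_(i < n) Zr (f i) :> R.
Proof. by elim: n => [|n IHn] /=; rewrite ?big_ord0 ?Zr0 // ZrD IHn big_ord_recr. Qed.

Definition act (k p : 'I_48) : 'I_48 := inord (actN k p).
Definition act_inv (k i : 'I_48) : 'I_48 := inord (act_invN k i).

Lemma act_specN (k p : 'I_48) :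
  [&& act_invN k (actN k p) == p, actN k (act_invN k p) == p,
      (actN k p < 48)%nat & (act_invN k p < 48)%nat].
Proof. by have := allNP (allNP act_bijN (ltn_ord k)) (ltn_ord p). Qed.

Lemma act_invE (k p : 'I_48) : act_inv k p = act_invN k p :> nat.
Proof. by rewrite inordK //; case/and4P: (act_specN k p). Qed.

Lemma act_inv_bij (k : 'I_48) : bijective (act_inv k).
Proof.
have actE p : act k p = actN k p :> nat.
  by rewrite inordK //; case/and4P: (act_specN k p).
exists (act k) => p; apply: ord_inj; rewrite ?actE ?act_invE ?actE.
  by case/and4P: (act_specN k p) => _ /eqP.
by case/and4P: (act_specN k p) => /eqP.
Qed.

Definition Wcert {R : realFieldType} (p q : 'I_48) : R :=
  Zr (zmx cert_W p q) / Zr cert_scaleW.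

Definition M48 {R : realFieldType} (i j : 'I_48) : R := Zr (M240 i j) / 240%:R.

Section Certificate.

Variable R : realFieldType.

Lemma psd_cert_Y : psd (fun r s : 'I_45 => Zr (zmx cert_Y r s) : R).
Proof.
have scale_gt0 : 0 < Zr cert_scaleY :> R by apply: Zr_gt0.
have LDL (r : 'I_45) : [/\ 0 <= Zr (nth 0%Z cert_D r) :> R &
    \sum_(s | s != r) (`|Zr (residualY r s)| + `|Zr (residualY s r)|)
      <= 2%:R * Zr (residualY r r) :> R].
  have /andP[/Z.leb_spec0 D_ge0 /Z.leb_spec0 dom] := allNP cert_Y_LDL (ltn_ord r).
  split; first exact: Zr_ge0.
  have := Zr_le R dom; rewrite ZrM -[2%Z]/(Z.of_nat 2) Zr_nat Zr_sumZ.
  apply: le_trans.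
  rewrite big_mkcond /=; apply: ler_sum => s _.
  by case: eqP => [->|/eqP s_neq_r]; rewrite ?eqxx ?Zr0 // ifN // ZrD !Zr_abs.
apply: (psdZ scale_gt0) => v.
rewrite (eq_qform (B := fun r s : 'I_45 =>
  \sum_(t < 45) Zr (zmx cert_L r t) * Zr (nth 0%Z cert_D t) * Zr (zmx cert_L s t)
  + Zr (residualY r s))); last first.
  move=> r s; rewrite -ZrM.
  have -> : \sum_(t < 45) Zr (zmx cert_L r t) * Zr (nth 0%Z cert_D t) * Zr (zmx cert_L s t) =
            Zr (sumZ (fun t => zmx cert_L r t * nth 0%Z cert_D t * zmx cert_L s t)%Z 45) :> R.
    by rewrite Zr_sumZ; apply: eq_bigr => t _; rewrite !ZrM.
  by rewrite -ZrD /residualY Zplus_minus.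
rewrite qformD addr_ge0 //.
  by apply: psd_gram => t; case: (LDL t).
by apply: psd_diag_dominant => r; case: (LDL r).
Qed.

Lemma Wcert_split (p q : 'I_48) : Wcert p q = (Zr cert_scaleW)^-1 *
  (\sum_(r < 45) \sum_(s < 45) Zr (zmx cert_V p r) * Zr (zmx cert_Y r s) * Zr (zmx cert_V q s)
   + Zr (zmx cert_N p q)) :> R.
Proof.
rewrite /Wcert; have /Z.eqb_spec -> := allNP (allNP cert_W_split (ltn_ord p)) (ltn_ord q).
rewrite mulrC ZrD Zr_sumZ; congr (_ * (_ + _)); apply: eq_bigr => r _.
case: Z.eqb_spec => [V0|_]; last by rewrite Zr_sumZ; apply: eq_bigr => s _; rewrite !ZrM.
by rewrite V0 Zr0 big1 // => s _; rewrite !mul0r.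
Qed.

Lemma copositive_Wcert : copositive (@Wcert R).
Proof.
move=> v v_ge0; rewrite (eq_qform _ Wcert_split) qformZ mulr_ge0 //.
  by rewrite invr_ge0 ltW // Zr_gt0.
rewrite qformD addr_ge0 //; first by rewrite qform_congr psd_cert_Y.
apply: copositive_ge0 v_ge0 => p q; apply: Zr_ge0; apply/Z.leb_spec0.
by have := allNP (allNP cert_N_ge0 (ltn_ord p)) (ltn_ord q).
Qed.

Lemma sym3_Wcert (k i j : 'I_48) :
  sym3 (fun k i j => Wcert (act_inv k i) (act_inv k j)) k i j =
  sym3 (fun _ => M48) k i j :> R.
Proof.
have /Z.eqb_spec := allNP (allNP (allNP cert_sym3 (ltn_ord k)) (ltn_ord i)) (ltn_ord j).
move=> /(congr1 (@Zr R)); rewrite !ZrM -[240%Z]/(Z.of_nat 240) Zr_nat => eq_sym3.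
have scaleW_neq0 : Zr cert_scaleW != 0 :> R by rewrite gt_eqF // Zr_gt0.
have -> : sym3 (fun k i j => Wcert (act_inv k i) (act_inv k j)) k i j =
          Zr (sym3Z (fun k i j => zmx cert_W (act_invN k i) (act_invN k j)) k i j)
          / Zr cert_scaleW :> R.
  by rewrite /sym3 /sym3Z /Wcert !act_invE !ZrD !mulrDl.
have -> : sym3 (fun _ => M48) k i j = Zr (sym3Z (fun _ => M240) k i j) / 240%:R :> R.
  by rewrite /sym3 /sym3Z /M48 !ZrD !mulrDl.
by apply/eqP; rewrite eqr_div ?pnatr_eq0 // mulrC eq_sym3 mulrC.
Qed.

Lemma copositive_M48 : copositive (@M48 R).
Proof.
apply: (copositive_cubic (W := fun k i j => Wcert (act_inv k i) (act_inv k j))).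
  by move=> k; apply: copositive_reindex (act_inv_bij k) copositive_Wcert.
exact: sym3_Wcert.
Qed.

End Certificate.

Lemma f24E (t : 'Z_24) : f24 t = nth 0%nat f24_table t.
Proof.
rewrite /f24 cardsE cardE /enum_mem size_filter /= -enumT.
have -> : count (mem (fun x : 'Z_24 => x * x == t)) (enum 'Z_24) =
          count (fun n => (n * n) %% 24 == t)%nat (iota 0 24).
  by rewrite -val_enum_ord count_map.
exact/eqP/(allNP f24_tableP (ltn_ord t)).
Qed.

Lemma sum_conv24 (R : fieldType) (a b w : 'Z_24 -> R) :
  \sum_t conv24 a b t * w t = 24%:R^-1 * \sum_i \sum_j a i * b j * w (i + j).
Proof.
rewrite /conv24; under eq_bigr => t _ do rewrite -mulrA mulr_suml.
rewrite -mulr_sumr exchange_big /=; congr (_ * _); apply: eq_bigr => i _.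
rewrite (reindex_inj (addrI i)) /=; apply: eq_bigr => j _.
by rewrite addrC addKr.
Qed.


Section Reduction.

Variable R : realFieldType.

Definition pair48 (a b : 'Z_24 -> R) (p : 'I_48) : R :=
  if (p < 24)%nat then a (inord p) else b (inord (p - 24)).

Lemma sum_I48 (F : 'I_48 -> R) :
  \sum_p F p = \sum_(i < 24) F (lshift 24 i) + \sum_(j < 24) F (rshift 24 j).
Proof. exact: (@big_split_ord R 0 +%R 24 24 xpredT F). Qed.

Lemma pair48_lshift a b (i : 'I_24) : pair48 a b (lshift 24 i) = a i.
Proof. by rewrite /pair48 /= ltn_ord inord_val. Qed.

Lemma pair48_rshift a b (j : 'I_24) : pair48 a b (rshift 24 j) = b j.
Proof. by rewrite /pair48 /= addKn inord_val. Qed.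

Lemma M240_cross (i j : nat) : (i < 24)%nat ->
  M240 i (24 + j) = M240 (24 + j) i /\
  M240 i (24 + j) = (5 * Z.of_nat (nth 0%nat f24_table ((i + j) %% 24)) - 6)%Z.
Proof.
move=> lt_i24; rewrite /M240 lt_i24 ltnNge leq_addr /= addnCA addKn.
by rewrite -addnA addKn (addnC j).
Qed.

Lemma M48_ll (i i' : 'I_24) :
  M48 (lshift 24 i) (lshift 24 i') = (if i == i' then 9%:R / 40%:R else 0) :> R.
Proof.
rewrite /M48 /M240 /= !ltn_ord eqxx.
case: (i =P i') => [->|/eqP neq_ii']; last by rewrite ifN // Zr0 mul0r.
by rewrite eqxx -[54%Z]/(Z.of_nat 54) Zr_nat; lra.
Qed.

Lemma M48_rr (j j' : 'I_24) :
  M48 (rshift 24 j) (rshift 24 j') = (if j == j' then 9%:R / 40%:R else 0) :> R.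
Proof.
rewrite /M48 /M240 /= eqn_add2l.
case: (j =P j') => [->|/eqP neq_jj']; last by rewrite ifN // Zr0 mul0r.
by rewrite eqxx -[54%Z]/(Z.of_nat 54) Zr_nat; lra.
Qed.

Lemma M48_cross (i j : 'I_24) :
  M48 (lshift 24 i) (rshift 24 j) = M48 (rshift 24 j) (lshift 24 i) :> R /\
  M48 (lshift 24 i) (rshift 24 j) =
  (5%:R * (f24 ((i : 'Z_24) + (j : 'Z_24)))%:R - 6%:R) / 240%:R :> R.
Proof.
rewrite /M48; have [-> ->] := M240_cross j (ltn_ord i); split=> //.
by rewrite ZrB ZrM f24E -[5%Z]/(Z.of_nat 5) -[6%Z]/(Z.of_nat 6) !Zr_nat.
Qed.

Lemma qform_M48_pair (a b : 'Z_24 -> R) :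
  qform M48 (pair48 a b) =
  9%:R / 40%:R * (\sum_(i < 24) a i ^+ 2 + \sum_(j < 24) b j ^+ 2)
  + 24%:R^-1 * \sum_(i < 24) \sum_(j < 24) a i * b j * (f24 ((i : 'Z_24) + (j : 'Z_24)))%:R
  - 20%:R^-1 * (\sum_(i < 24) a i) * (\sum_(j < 24) b j).
Proof.
have diag (x : 'I_24 -> R) :
    \sum_i \sum_i' (if i == i' then 9%:R / 40%:R else 0) * x i * x i' =
    9%:R / 40%:R * \sum_i x i ^+ 2.
  rewrite mulr_sumr; apply: eq_bigr => i _.
  rewrite (bigD1 i) //= eqxx big1 ?addr0 ?mulrA // => i'.
  by rewrite eq_sym => /negbTE ->; rewrite !mul0r.
have Ell : \sum_(i < 24) \sum_(i' < 24)
    M48 (lshift 24 i) (lshift 24 i') * pair48 a b (lshift 24 i) * pair48 a b (lshift 24 i') =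
    9%:R / 40%:R * \sum_(i < 24) a i ^+ 2.
  rewrite -diag; apply: eq_bigr => i _; apply: eq_bigr => i' _.
  by rewrite M48_ll !pair48_lshift.
have Err : \sum_(j < 24) \sum_(j' < 24)
    M48 (rshift 24 j) (rshift 24 j') * pair48 a b (rshift 24 j) * pair48 a b (rshift 24 j') =
    9%:R / 40%:R * \sum_(j < 24) b j ^+ 2.
  rewrite -diag; apply: eq_bigr => j _; apply: eq_bigr => j' _.
  by rewrite M48_rr !pair48_rshift.
have Elr : \sum_(i < 24) \sum_(j < 24)
    M48 (lshift 24 i) (rshift 24 j) * pair48 a b (lshift 24 i) * pair48 a b (rshift 24 j) +
  \sum_(j < 24) \sum_(i < 24)
    M48 (rshift 24 j) (lshift 24 i) * pair48 a b (rshift 24 j) * pair48 a b (lshift 24 i) =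
  24%:R^-1 * \sum_(i < 24) \sum_(j < 24) a i * b j * (f24 ((i : 'Z_24) + (j : 'Z_24)))%:R
  - 20%:R^-1 * (\sum_(i < 24) a i) * (\sum_(j < 24) b j).
  rewrite [X in _ + X]exchange_big -big_split -mulrA big_distrl /= !mulr_sumr -sumrB.
  apply: eq_bigr => i _; rewrite -big_split big_distrr /= !mulr_sumr -sumrB.
  apply: eq_bigr => j _; rewrite !pair48_lshift !pair48_rshift -(M48_cross i j).1.
  by rewrite (M48_cross i j).2; field.
rewrite /qform sum_I48.
under eq_bigr => i _ do rewrite sum_I48.
under [X in _ + X]eq_bigr => j _ do rewrite sum_I48.
move: Elr; rewrite !big_split /= Ell Err; lra.
Qed.

Lemma conv24_f24_ge (a b : 'Z_24 -> R) :
  (forall i, 0 <= a i) -> (forall i, 0 <= b i) ->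
  9%:R / 40%:R * (2%:R / 9%:R * (\sum_i a i) * (\sum_i b i)
                  - \sum_i a i ^+ 2 - \sum_i b i ^+ 2)
  <= \sum_t conv24 a b t * (f24 t)%:R.
Proof.
move=> a_ge0 b_ge0.
have pair_ge0 p : 0 <= pair48 a b p by rewrite /pair48; case: ifP.
have := copositive_M48 pair_ge0; rewrite qform_M48_pair sum_conv24.
lra.
Qed.

End Reduction.

Lemma inv_2sqrt5_le (R : rcfType) : (2%:R * Num.sqrt 5%:R)^-1 <= 9%:R / 40%:R :> R.
Proof.
have sqrt5_ge0 : 0 <= Num.sqrt (5%:R : R) := sqrtr_ge0 _.
have sqrt5_sq : Num.sqrt (5%:R : R) ^+ 2 = 5%:R by rewrite sqr_sqrtr // ler0n.
have sqrt5_ge : 20%:R / 9%:R <= Num.sqrt (5%:R : R) by nra.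
rewrite -[9%:R / 40%:R]invf_div lef_pV2 ?posrE //; lra.
Qed.

Theorem proposition5p2 (R : rcfType) (a b : 'Z_24 -> R)
  (ha : forall i, 0 <= a i) (hb : forall i, 0 <= b i) :
  \sum_(t : 'Z_24) conv24 a b t * (f24 t)%:R >=
  (2%:R * Num.sqrt 5%:R)^-1 *
    ((2%:R / 9%:R) * (\sum_(i : 'Z_24) a i) * (\sum_(i : 'Z_24) b i)
     - \sum_(i : 'Z_24) a i ^+ 2 - \sum_(i : 'Z_24) b i ^+ 2).
Proof.
have lhs_ge0 : 0 <= \sum_(t : 'Z_24) conv24 a b t * (f24 t)%:R.
  apply: sumr_ge0 => t _; rewrite mulr_ge0 // mulr_ge0 ?invr_ge0 //.
  by apply: sumr_ge0 => i _; rewrite mulr_ge0.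
have c_gt0 : 0 < (2%:R * Num.sqrt 5%:R)^-1 :> R.
  by rewrite invr_gt0 mulr_gt0 // sqrtr_gt0 ltr0n.
set D := (X in _ * X <= _).
have [D_ge0|D_lt0] := lerP 0 D.
  apply: le_trans (conv24_f24_ge ha hb); exact: ler_wpM2r (inv_2sqrt5_le R).
by apply: le_trans lhs_ge0; rewrite pmulr_rle0 // ltW.
Qed.
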